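(* Let $\mathbb{T}$ be a time scale with $\sup\mathbb{T}=+\infty$ and bounded graininess, and let the control system $x^\Delta=Ax+Bu$ ($A\in\mathbb{R}^{n\times n}$, $B\in\mathbb{R}^{n\times m}$) on $\mathbb{T}$ be positive. If it is positively stabilizable, then for every $\lambda\in\operatorname{spec}(A)$ with $\lambda\notin\mathcal{S}_\mathbb{T}$ one has $\operatorname{rank}[\lambda I-A,\ B]=n$.
   Context: $x^\Delta$ denotes the delta derivative on the time scale $\mathbb{T}$ (a closed nonempty subset of $\mathbb{R}$); controls are piecewise continuous. The control system $x^\Delta=Ax+Bu$ is positive if for every $t_0\in\mathbb{T}$, every control $u$ with values in $\mathbb{R}^m_+$ and every $x_0\in\mathbb{R}^n_+$, the trajectory with $x(t_0)=x_0$ stays in $\mathbb{R}^n_+$. An autonomous system $x^\Delta=Mx$ is positive if trajectories starting in $\mathbb{R}^n_+$ stay in $\mathbb{R}^n_+$; it is uniformly exponentially stable (resp. positively uniformly exponentially stable) if there exist $K\ge1,\alpha>0$ and an open neighborhood $V$ of $0$ with $\|x(t)\|\le Ke^{-\alpha(t-t_0)}\|x_0\|$ for all $t_0\le t$ in $\mathbb{T}$ and all $x_0\in V$ (resp. all $x_0\in V\cap\mathbb{R}^n_+$). The system is positively stabilizable if there is $K\in\mathbb{R}^{m\times n}$ such that $x^\Delta=(A+BK)x$ is positive and positively uniformly exponentially stable. $\mathcal{S}_\mathbb{T}$ is the set of $\lambda\in\mathbb{C}$ for which the scalar equation $x^\Delta=\lambda x$ is uniformly exponentially stable. *)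

From Stdlib Require Import Reals List Arith ClassicalEpsilon.
Open Scope R_scope.

Fixpoint rsum (k : nat) (f : nat -> R) : R :=
  match k with O => 0 | S k' => rsum k' f + f k' end.

(* vectors of R^d are functions nat -> R, only indices < d matter *)
Definition vec := nat -> R.
Definition vadd (x y : vec) : vec := fun i => x i + y i.
Definition vsub (x y : vec) : vec := fun i => x i - y i.
Definition vscal (a : R) (x : vec) : vec := fun i => a * x i.
Definition vnorm (d : nat) (x : vec) : R := sqrt (rsum d (fun i => x i ^ 2)).
Definition vzero : vec := fun _ => 0.
Definition mat_vec (d : nat) (M : nat -> nat -> R) (x : vec) : vec :=
  fun i => rsum d (fun j => M i j * x j).
Definition nonneg (d : nat) (x : vec) : Prop := forall i, (i < d)%nat -> 0 <= x i.

Definition Cpx := (R * R)%type.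
Definition cx0 : Cpx := (0, 0).
Definition cxR (r : R) : Cpx := (r, 0).
Definition cxadd (z w : Cpx) : Cpx := (fst z + fst w, snd z + snd w).
Definition cxsub (z w : Cpx) : Cpx := (fst z - fst w, snd z - snd w).
Definition cxmul (z w : Cpx) : Cpx :=
  (fst z * fst w - snd z * snd w, fst z * snd w + snd z * fst w).
Definition cxscal (a : R) (z : Cpx) : Cpx := (a * fst z, a * snd z).
Definition cxnorm (z : Cpx) : R := sqrt (fst z ^ 2 + snd z ^ 2).
Fixpoint cxsum (k : nat) (f : nat -> Cpx) : Cpx :=
  match k with O => cx0 | S k' => cxadd (cxsum k' f) (f k') end.

Definition in_spec (n : nat) (A : nat -> nat -> R) (lam : Cpx) : Prop :=
  exists v : nat -> Cpx, (exists i, (i < n)%nat /\ v i <> cx0) /\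
    forall i, (i < n)%nat ->
      cxsum n (fun j => cxmul (cxR (A i j)) (v j)) = cxmul lam (v i).

Definition cols_indep (p : nat) (M : nat -> nat -> Cpx) (r : nat) (sel : nat -> nat)
  : Prop :=
  forall a : nat -> Cpx,
    (forall i, (i < p)%nat -> cxsum r (fun k => cxmul (a k) (M i (sel k))) = cx0) ->
    forall k, (k < r)%nat -> a k = cx0.
Definition has_rank (p q : nat) (M : nat -> nat -> Cpx) (r : nat) : Prop :=
  (exists sel, (forall k, (k < r)%nat -> (sel k < q)%nat) /\ cols_indep p M r sel) /\
  (forall sel, (forall k, (k < S r)%nat -> (sel k < q)%nat) ->
     ~ cols_indep p M (S r) sel).

(* the n x (n+m) complex matrix [lam I - A, B] *)
Definition pbh_matrix (n : nat) (A B : nat -> nat -> R) (lam : Cpx)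
  : nat -> nat -> Cpx :=
  fun i j => if (j <? n)%nat
             then cxsub (if (i =? j)%nat then lam else cx0) (cxR (A i j))
             else cxR (B i (j - n)%nat).

Definition is_time_scale (T : R -> Prop) : Prop :=
  (exists t, T t) /\
  (forall x, (forall e, 0 < e -> exists y, T y /\ Rabs (y - x) < e) -> T x).
Definition unbounded_above (T : R -> Prop) : Prop :=
  forall M, exists t, T t /\ M < t.

Definition is_inf (P : R -> Prop) (s : R) : Prop :=
  (forall r, P r -> s <= r) /\ (forall s', (forall r, P r -> s' <= r) -> s' <= s).
Definition fjump (T : R -> Prop) (t : R) : R :=
  epsilon (inhabits 0) (fun s => is_inf (fun r => T r /\ t < r) s).
Definition graininess (T : R -> Prop) (t : R) : R := fjump T t - t.
Definition bounded_graininess (T : R -> Prop) : Prop :=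
  exists Mu, forall t, T t -> graininess T t <= Mu.

Definition dom (T : R -> Prop) (t0 : R) : R -> Prop := fun s => T s /\ t0 <= s.

Definition delta_deriv_at {X : Type} (sub : X -> X -> X) (scal : R -> X -> X)
  (nrm : X -> R) (T D : R -> Prop) (x : R -> X) (t : R) (v : X) : Prop :=
  forall eps, 0 < eps -> exists del, 0 < del /\
    forall s, D s -> Rabs (s - t) < del ->
      nrm (sub (sub (x (fjump T t)) (x s)) (scal (fjump T t - s) v))
        <= eps * Rabs (fjump T t - s).

Definition cont_rel {X : Type} (sub : X -> X -> X) (nrm : X -> R)
  (D : R -> Prop) (x : R -> X) (t : R) : Prop :=
  forall eps, 0 < eps -> exists del, 0 < del /\
    forall s, D s -> Rabs (s - t) < del -> nrm (sub (x s) (x t)) < eps.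

Definition left_lim_exists (T : R -> Prop) (m : nat) (u : R -> vec) (t : R) : Prop :=
  exists l, forall eps, 0 < eps -> exists del, 0 < del /\
    forall s, T s -> t - del < s < t -> vnorm m (vsub (u s) l) < eps.
Definition right_lim_exists (T : R -> Prop) (m : nat) (u : R -> vec) (t : R) : Prop :=
  exists l, forall eps, 0 < eps -> exists del, 0 < del /\
    forall s, T s -> t < s < t + del -> vnorm m (vsub (u s) l) < eps.
Definition pw_continuous (T : R -> Prop) (m : nat) (u : R -> vec) : Prop :=
  forall a b, exists L : list R, forall t, T t -> a <= t <= b ->
    (~ In t L -> cont_rel vsub (vnorm m) T u t) /\
    left_lim_exists T m u t /\ right_lim_exists T m u t.

Definition ctrl_solution (T : R -> Prop) (n m : nat) (A B : nat -> nat -> R)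
  (u : R -> vec) (t0 : R) (x0 : vec) (x : R -> vec) : Prop :=
  (forall i, (i < n)%nat -> x t0 i = x0 i) /\
  forall t, dom T t0 t ->
    cont_rel vsub (vnorm n) (dom T t0) x t /\
    ((t < fjump T t \/ cont_rel vsub (vnorm m) T u t) ->
     delta_deriv_at vsub vscal (vnorm n) T (dom T t0) x t
       (vadd (mat_vec n A (x t)) (mat_vec m B (u t)))).

Definition aut_solution (T : R -> Prop) (n : nat) (M : nat -> nat -> R)
  (t0 : R) (x0 : vec) (x : R -> vec) : Prop :=
  (forall i, (i < n)%nat -> x t0 i = x0 i) /\
  forall t, dom T t0 t ->
    cont_rel vsub (vnorm n) (dom T t0) x t /\
    delta_deriv_at vsub vscal (vnorm n) T (dom T t0) x t (mat_vec n M (x t)).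

Definition cx_solution (T : R -> Prop) (lam : Cpx) (t0 : R) (x0 : Cpx)
  (x : R -> Cpx) : Prop :=
  x t0 = x0 /\
  forall t, dom T t0 t ->
    cont_rel cxsub cxnorm (dom T t0) x t /\
    delta_deriv_at cxsub cxscal cxnorm T (dom T t0) x t (cxmul lam (x t)).

Definition positive_control_system (T : R -> Prop) (n m : nat)
  (A B : nat -> nat -> R) : Prop :=
  forall t0, T t0 -> forall u, pw_continuous T m u ->
    (forall t, T t -> nonneg m (u t)) ->
    forall x0, nonneg n x0 -> forall x, ctrl_solution T n m A B u t0 x0 x ->
      forall t, dom T t0 t -> nonneg n (x t).

Definition positive_aut (T : R -> Prop) (n : nat) (M : nat -> nat -> R) : Prop :=
  forall t0, T t0 -> forall x0, nonneg n x0 -> forall x, aut_solution T n M t0 x0 x ->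
    forall t, dom T t0 t -> nonneg n (x t).

Definition open_nbhd0 (n : nat) (V : vec -> Prop) : Prop :=
  V vzero /\ forall x, V x -> exists r, 0 < r /\
    forall y, vnorm n (vsub y x) < r -> V y.

Definition pos_unif_exp_stable (T : R -> Prop) (n : nat) (M : nat -> nat -> R)
  : Prop :=
  exists K al V, 1 <= K /\ 0 < al /\ open_nbhd0 n V /\
    forall t0 t, T t0 -> T t -> t0 <= t ->
      forall x0, V x0 -> nonneg n x0 -> forall x, aut_solution T n M t0 x0 x ->
        vnorm n (x t) <= K * exp (- al * (t - t0)) * vnorm n x0.

Definition closed_loop (m : nat) (A B K : nat -> nat -> R) : nat -> nat -> R :=
  fun i j => A i j + rsum m (fun k => B i k * K k j).

Definition positively_stabilizable (T : R -> Prop) (n m : nat)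
  (A B : nat -> nat -> R) : Prop :=
  exists K : nat -> nat -> R,
    positive_aut T n (closed_loop m A B K) /\
    pos_unif_exp_stable T n (closed_loop m A B K).

Definition cx_open_nbhd0 (V : Cpx -> Prop) : Prop :=
  V cx0 /\ forall z, V z -> exists r, 0 < r /\
    forall w, cxnorm (cxsub w z) < r -> V w.

Definition in_S_T (T : R -> Prop) (lam : Cpx) : Prop :=
  exists K al V, 1 <= K /\ 0 < al /\ cx_open_nbhd0 V /\
    forall t0 t, T t0 -> T t -> t0 <= t ->
      forall x0, V x0 -> forall x, cx_solution T lam t0 x0 x ->
        cxnorm (x t) <= K * exp (- al * (t - t0)) * cxnorm x0.

From Pilot Require Import Defs.
From Stdlib Require Import Reals Lra Lia List Classical ClassicalEpsilon ZArith.
From Coquelicot Require Import Coquelicot.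
Open Scope R_scope.

(** Suppose [rank [lam I - A, B] < n].  Then there is a nonzero complex
    row [w] with [w (lam I - A) = 0] and [w B = 0], so [w (A + B K) = lam w] for
    the stabilizing feedback [K].  Take [i0] with [w_(i0) <> 0] and a small
    initial value [x0 = delta e_(i0) >= 0].  The closed-loop solution [x] from
    [x0] exists and decays exponentially (positive stability), and
    [y = w x] solves [y^Delta = lam y] with [y(t0) <> 0].  By linearity and
    uniqueness every solution of [z^Delta = lam z] is a multiple of [y], so
    [lam] lies in [S_T]: contradiction. *)


Lemma rsum_ext : forall r f g, (forall k, (k < r)%nat -> f k = g k) -> rsum r f = rsum r g.
Proof.
  induction r; intros f g H; simpl; auto.
  rewrite (IHr f g); [|intros; apply H; lia]. rewrite H; auto.
Qed.

Lemma rsum_plus : forall r f g, rsum r (fun k => f k + g k) = rsum r f + rsum r g.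
Proof. induction r; intros; simpl; [lra|rewrite IHr; lra]. Qed.

Lemma rsum_minus : forall r f g, rsum r (fun k => f k - g k) = rsum r f - rsum r g.
Proof. induction r; intros; simpl; [lra|rewrite IHr; lra]. Qed.

Lemma rsum_scal : forall r c f, rsum r (fun k => c * f k) = c * rsum r f.
Proof. induction r; intros; simpl; [lra|rewrite IHr; lra]. Qed.

Lemma rsum_zero : forall r f, (forall k, (k < r)%nat -> f k = 0) -> rsum r f = 0.
Proof.
  induction r; intros f H; simpl; auto.
  rewrite IHr; [rewrite H; [lra|lia]|intros; apply H; lia].
Qed.

Lemma rsum_const : forall n c, rsum n (fun _ => c) = INR n * c.
Proof. induction n; intros; simpl rsum; [simpl; ring|]. rewrite IHn, S_INR; ring. Qed.

Lemma rsum_swap : forall p q F,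
  rsum p (fun i => rsum q (fun j => F i j)) = rsum q (fun j => rsum p (fun i => F i j)).
Proof.
  induction p; intros; simpl.
  - symmetry; apply rsum_zero; auto.
  - rewrite IHp, <- rsum_plus. auto.
Qed.

Lemma rsum_le : forall r f g, (forall k, (k < r)%nat -> f k <= g k) -> rsum r f <= rsum r g.
Proof.
  induction r; intros f g H; simpl; [lra|].
  assert (rsum r f <= rsum r g) by (apply IHr; intros; apply H; lia).
  assert (f r <= g r) by (apply H; lia). lra.
Qed.

Lemma rsum_nonneg : forall r f, (forall k, (k < r)%nat -> 0 <= f k) -> 0 <= rsum r f.
Proof. intros. replace 0 with (rsum r (fun _ => 0)) by (apply rsum_zero; auto). apply rsum_le; auto. Qed.

Lemma rsum_abs : forall r f, Rabs (rsum r f) <= rsum r (fun k => Rabs (f k)).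
Proof.
  induction r; intros; simpl; [rewrite Rabs_R0; lra|].
  eapply Rle_trans; [apply Rabs_triang|]. specialize (IHr f). lra.
Qed.

Lemma rsum_term_le : forall r f j, (j < r)%nat -> (forall k, (k < r)%nat -> 0 <= f k) -> f j <= rsum r f.
Proof.
  induction r; intros f j Hj H; [lia|]. simpl.
  destruct (Nat.eq_dec j r).
  - subst. assert (0 <= rsum r f) by (apply rsum_nonneg; intros; apply H; lia). lra.
  - assert (f j <= rsum r f) by (apply IHr; [lia|intros; apply H; lia]).
    assert (0 <= f r) by (apply H; lia). lra.
Qed.

Lemma rsum_delta : forall n j f, (j < n)%nat -> rsum n (fun i => if (i =? j)%nat then f i else 0) = f j.
Proof.
  induction n; intros j f Hj; [lia|]. simpl.
  destruct (Nat.eqb_spec n j).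
  - subst. rewrite rsum_zero; [lra|]. intros k Hk. destruct (Nat.eqb_spec k j); [lia|auto].
  - rewrite IHn by lia. lra.
Qed.

(** Complex arithmetic on pairs [(re, im)]; [cxnorm] is Coquelicot's [Cmod]. *)

Lemma cx_eq : forall z w : Cpx, fst z = fst w -> snd z = snd w -> z = w.
Proof. intros [a b] [c d]; simpl; intros; subst; auto. Qed.

Lemma fst_cxsum : forall r f, fst (cxsum r f) = rsum r (fun k => fst (f k)).
Proof. induction r; intros; simpl; auto. rewrite IHr; auto. Qed.
Lemma snd_cxsum : forall r f, snd (cxsum r f) = rsum r (fun k => snd (f k)).
Proof. induction r; intros; simpl; auto. rewrite IHr; auto. Qed.

Definition cx1 : Cpx := (1, 0).
Definition cxneg (z : Cpx) : Cpx := (- fst z, - snd z).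
Definition cxinv (z : Cpx) : Cpx :=
  (fst z / (fst z ^ 2 + snd z ^ 2), - snd z / (fst z ^ 2 + snd z ^ 2)).
Definition cxdiv (z w : Cpx) : Cpx := cxmul z (cxinv w).

Ltac cxsimpl := repeat match goal with z : Cpx |- _ => destruct z end;
  unfold cxmul, cxadd, cxsub, cxneg, cxdiv, cxinv, cxscal, cxR, cx0, cx1 in *; simpl in *.
Ltac cxring := cxsimpl; apply cx_eq; simpl; ring.

Lemma cx_nz_pos : forall z, z <> cx0 -> 0 < fst z ^ 2 + snd z ^ 2.
Proof.
  intros [a b] H; simpl.
  destruct (Req_dec a 0); destruct (Req_dec b 0).
  - subst; exfalso; apply H; auto.
  - assert (0 < b*b) by (apply Rsqr_pos_lt; auto). nra.
  - assert (0 < a*a) by (apply Rsqr_pos_lt; auto). nra.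
  - assert (0 < a*a) by (apply Rsqr_pos_lt; auto). nra.
Qed.

Lemma cxmul_inv : forall z, z <> cx0 -> cxmul z (cxinv z) = cx1.
Proof.
  intros z H. pose proof (cx_nz_pos z H). destruct z as [a b].
  unfold cxmul, cxinv, cx1; simpl in *. apply cx_eq; simpl; field; lra.
Qed.

Lemma cxsum_zero : forall r f, (forall k, (k < r)%nat -> f k = cx0) -> cxsum r f = cx0.
Proof. intros. apply cx_eq; rewrite ?fst_cxsum, ?snd_cxsum; apply rsum_zero; intros; rewrite H; auto. Qed.

Lemma cxsum_ext : forall r f g, (forall k, (k < r)%nat -> f k = g k) -> cxsum r f = cxsum r g.
Proof. intros. apply cx_eq; rewrite ?fst_cxsum, ?snd_cxsum; apply rsum_ext; intros; rewrite H; auto. Qed.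

Lemma cxsum_add : forall r f g, cxsum r (fun k => cxadd (f k) (g k)) = cxadd (cxsum r f) (cxsum r g).
Proof. intros. apply cx_eq; simpl; rewrite ?fst_cxsum, ?snd_cxsum; apply rsum_plus. Qed.

Lemma cxsum_sub : forall r f g, cxsum r (fun k => cxsub (f k) (g k)) = cxsub (cxsum r f) (cxsum r g).
Proof. intros. apply cx_eq; simpl; rewrite ?fst_cxsum, ?snd_cxsum; apply rsum_minus. Qed.

Lemma cxsum_mul_l : forall r c f, cxsum r (fun k => cxmul c (f k)) = cxmul c (cxsum r f).
Proof.
  intros. apply cx_eq; simpl; rewrite ?fst_cxsum, ?snd_cxsum; simpl.
  - rewrite rsum_minus, !rsum_scal; auto.
  - rewrite rsum_plus, !rsum_scal; auto.
Qed.

Lemma cxsum_swap : forall p q F,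
  cxsum p (fun i => cxsum q (fun j => F i j)) = cxsum q (fun j => cxsum p (fun i => F i j)).
Proof.
  intros. apply cx_eq; rewrite ?fst_cxsum, ?snd_cxsum.
  - rewrite (rsum_ext p _ (fun i => rsum q (fun j => fst (F i j)))) by (intros; apply fst_cxsum).
    rewrite rsum_swap. apply rsum_ext; intros; rewrite fst_cxsum; auto.
  - rewrite (rsum_ext p _ (fun i => rsum q (fun j => snd (F i j)))) by (intros; apply snd_cxsum).
    rewrite rsum_swap. apply rsum_ext; intros; rewrite snd_cxsum; auto.
Qed.

Lemma cxsum_delta : forall n j f, (j < n)%nat ->
  cxsum n (fun i => if (i =? j)%nat then f i else cx0) = f j.
Proof.
  intros n j f Hj. apply cx_eq; rewrite ?fst_cxsum, ?snd_cxsum.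
  - rewrite <- (rsum_delta n j (fun i => fst (f i))) by auto.
    apply rsum_ext; intros i _; destruct (i =? j)%nat; auto.
  - rewrite <- (rsum_delta n j (fun i => snd (f i))) by auto.
    apply rsum_ext; intros i _; destruct (i =? j)%nat; auto.
Qed.

Lemma cxn_ge0 : forall z, 0 <= cxnorm z.
Proof. intros. exact (Cmod_ge_0 z). Qed.
Lemma cxn_eq0 : forall z, cxnorm z = 0 -> z = cx0.
Proof. intros. exact (Cmod_eq_0 z H). Qed.
Lemma cxn_0 : cxnorm cx0 = 0.
Proof. exact Cmod_0. Qed.
Lemma cxn_tri : forall z w, cxnorm (cxadd z w) <= cxnorm z + cxnorm w.
Proof. intros. exact (Cmod_triangle z w). Qed.
Lemma cxn_mul : forall z w, cxnorm (cxmul z w) = cxnorm z * cxnorm w.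
Proof. intros. exact (Cmod_mult z w). Qed.
Lemma cxn_neg : forall z, cxnorm (cxneg z) = cxnorm z.
Proof. intros. exact (Cmod_opp z). Qed.
Lemma cxscal_mul : forall a z, cxscal a z = cxmul (cxR a) z.
Proof. intros a [x y]; apply cx_eq; simpl; ring. Qed.
Lemma cxn_scal : forall a z, cxnorm (cxscal a z) = Rabs a * cxnorm z.
Proof. intros. rewrite cxscal_mul, cxn_mul. f_equal. exact (Cmod_R a). Qed.
Lemma cxn_sub_tri : forall z w, cxnorm (cxsub z w) <= cxnorm z + cxnorm w.
Proof.
  intros. replace (cxsub z w) with (cxadd z (cxneg w)) by cxring.
  eapply Rle_trans; [apply cxn_tri|]. rewrite cxn_neg; lra.
Qed.

(* Extension of a solution [a'] of the reduced system by one unknown, chosen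
   so that the pivot row [g] is annihilated. *)
Definition pivot_solution (q : nat) (g a' : nat -> Cpx) (j : nat) : Cpx :=
  if (j <? q)%nat then a' j
  else cxneg (cxdiv (cxsum q (fun k => cxmul (g k) (a' k))) (g q)).

(* One Gaussian elimination step: if [a'] annihilates the row [f] reduced by
   the pivot row [g] (on the first [q] unknowns), then [pivot_solution]
   annihilates [f] itself. *)
Lemma pivot_solution_spec : forall q (g f a' : nat -> Cpx), g q <> cx0 ->
  cxsum q (fun j => cxmul (cxsub (f j) (cxmul (cxdiv (f q) (g q)) (g j))) (a' j)) = cx0 ->
  cxsum (S q) (fun j => cxmul (f j) (pivot_solution q g a' j)) = cx0.
Proof.
  intros q g f a' Hg Hred. simpl. unfold pivot_solution at 2. rewrite Nat.ltb_irrefl.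
  rewrite (cxsum_ext q _ (fun j => cxmul (f j) (a' j))).
  2:{ intros k Hk. unfold pivot_solution. destruct (Nat.ltb_spec k q); [auto|lia]. }
  rewrite (cxsum_ext q _ (fun j => cxsub (cxmul (f j) (a' j))
             (cxmul (cxdiv (f q) (g q)) (cxmul (g j) (a' j))))) in Hred by (intros; cxring).
  rewrite cxsum_sub, cxsum_mul_l in Hred. rewrite <- Hred. cxring.
Qed.

Lemma homogeneous_system_nontrivial : forall q (L : list (nat -> Cpx)), (length L < q)%nat ->
  exists a : nat -> Cpx, (exists j, (j < q)%nat /\ a j <> cx0) /\
    forall f, In f L -> cxsum q (fun j => cxmul (f j) (a j)) = cx0.
Proof.
  induction q as [|q IH]; intros L HL; [lia|].
  destruct (classic (forall f, In f L -> f q = cx0)) as [Hall|Hex].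
  - exists (fun j => if (j =? q)%nat then cx1 else cx0). split.
    + exists q; split; [lia|]. rewrite Nat.eqb_refl. unfold cx1, cx0; intro E; injection E; lra.
    + intros f Hf. simpl. rewrite cxsum_zero.
      * rewrite Nat.eqb_refl, (Hall f Hf). cxring.
      * intros k Hk. destruct (Nat.eqb_spec k q); [lia|cxring].
  - apply not_all_ex_not in Hex. destruct Hex as [g Hg].
    apply imply_to_and in Hg. destruct Hg as [HgL Hgq].
    destruct (in_split g L HgL) as [L1 [L2 ->]].
    set (reduce := fun f : nat -> Cpx => fun j => cxsub (f j) (cxmul (cxdiv (f q) (g q)) (g j))).
    destruct (IH (map reduce (L1 ++ L2))) as [a' [[j0 [Hj0 Ha0]] Ha']].
    { rewrite length_map, length_app. rewrite length_app in HL. simpl in HL. lia. }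
    exists (pivot_solution q g a'). split.
    + exists j0. split; [lia|]. unfold pivot_solution. destruct (Nat.ltb_spec j0 q); [auto|lia].
    + intros f Hf. apply pivot_solution_spec; auto.
      apply in_app_or in Hf. destruct Hf as [Hf|[<-|Hf]].
      * apply (Ha' (reduce f)), in_map, in_or_app; auto.
      * apply cxsum_zero; intros k _. unfold cxdiv. rewrite cxmul_inv by auto. cxring.
      * apply (Ha' (reduce f)), in_map, in_or_app; auto.
Qed.

Lemma in_rows : forall (F : nat -> nat -> Cpx) p i, (i < p)%nat -> In (F i) (map F (seq 0 p)).
Proof. intros. apply in_map. apply in_seq. lia. Qed.

Lemma cols_dependent_if_too_many : forall p r M sel, (p < r)%nat -> ~ cols_indep p M r sel.
Proof.
  intros p r M sel Hpr Hind.
  destruct (homogeneous_system_nontrivial r (map (fun i => fun k => M i (sel k)) (seq 0 p)))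
    as [a [[j [Hj Ha]] Hs]].
  { rewrite length_map, length_seq; auto. }
  apply Ha. apply (Hind a); auto.
  intros i Hi. rewrite <- (Hs (fun k => M i (sel k))).
  - apply cxsum_ext; intros; cxring.
  - apply (in_rows (fun i k => M i (sel k))); auto.
Qed.

Lemma max_nat_exists : forall (P : nat -> Prop) b, P 0%nat -> (forall r, P r -> (r <= b)%nat) ->
  exists r, P r /\ forall r', P r' -> (r' <= r)%nat.
Proof.
  intros P b H0 Hb. apply NNPP; intro Hn.
  assert (Hunb : forall k, exists r, P r /\ (k <= r)%nat).
  { induction k. { exists 0%nat; split; auto; lia. }
    destruct IHk as [r [Pr Hr]].
    assert (~ (forall r', P r' -> (r' <= r)%nat)) by (intro; apply Hn; eauto).
    apply not_all_ex_not in H. destruct H as [r' H]. apply imply_to_and in H. destruct H.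
    exists r'; split; auto; lia. }
  destruct (Hunb (S b)) as [r [Pr Hr]]. specialize (Hb r Pr). lia.
Qed.

Lemma dependent_extension_spans : forall p M r sel j,
  cols_indep p M r sel ->
  ~ cols_indep p M (S r) (fun k => if (k =? r)%nat then j else sel k) ->
  exists b : nat -> Cpx, forall i, (i < p)%nat ->
    M i j = cxsum r (fun k => cxmul (b k) (M i (sel k))).
Proof.
  intros p M r sel j Hind Hdep.
  apply not_all_ex_not in Hdep. destruct Hdep as [a Hdep].
  apply imply_to_and in Hdep. destruct Hdep as [Hrel Hnz].
  assert (Hrel' : forall i, (i < p)%nat ->
    cxadd (cxsum r (fun k => cxmul (a k) (M i (sel k)))) (cxmul (a r) (M i j)) = cx0).
  { intros i Hi. rewrite <- (Hrel i Hi). simpl. rewrite Nat.eqb_refl. f_equal.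
    apply cxsum_ext; intros k Hk. destruct (Nat.eqb_spec k r); [lia|auto]. }
  assert (Har : a r <> cx0).
  { intro Ar. apply Hnz. intros k Hk.
    destruct (Nat.eq_dec k r) as [->|Hkr]; auto.
    apply Hind; [|lia]. intros i Hi. specialize (Hrel' i Hi). rewrite Ar in Hrel'.
    destruct (cxsum r (fun k => cxmul (a k) (M i (sel k)))). cxsimpl.
    injection Hrel'; intros. apply cx_eq; simpl; lra. }
  exists (fun k => cxneg (cxdiv (a k) (a r))). intros i Hi.
  rewrite (cxsum_ext r _ (fun k => cxmul (cxneg (cxinv (a r))) (cxmul (a k) (M i (sel k)))))
    by (intros; cxring).
  rewrite cxsum_mul_l. specialize (Hrel' i Hi).
  set (S := cxsum r (fun k => cxmul (a k) (M i (sel k)))) in *.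
  assert (E : cxmul (a r) (M i j) = cxneg S).
  { destruct S, (cxmul (a r) (M i j)). cxsimpl. injection Hrel'; intros. apply cx_eq; simpl; lra. }
  replace (M i j) with (cxmul (cxinv (a r)) (cxmul (a r) (M i j))).
  - rewrite E. cxring.
  - replace (cxmul (cxinv (a r)) (cxmul (a r) (M i j)))
      with (cxmul (cxmul (a r) (cxinv (a r))) (M i j)) by cxring.
    rewrite cxmul_inv by auto. cxring.
Qed.

Lemma independent_cols_or_left_null_vector : forall p q M,
  (exists sel, (forall k, (k < p)%nat -> (sel k < q)%nat) /\ cols_indep p M p sel) \/
  (exists w : nat -> Cpx, (exists i, (i < p)%nat /\ w i <> cx0) /\
     forall j, (j < q)%nat -> cxsum p (fun i => cxmul (w i) (M i j)) = cx0).
Proof.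
  intros p q M.
  set (P := fun r => exists sel, (forall k, (k < r)%nat -> (sel k < q)%nat) /\ cols_indep p M r sel).
  assert (HPb : forall r, P r -> (r <= p)%nat).
  { intros r [sel [_ Hi]]. destruct (Compare_dec.le_lt_dec r p); auto.
    exfalso; eapply cols_dependent_if_too_many; eauto. }
  destruct (max_nat_exists P p) as [r [[sel [Hsel Hind]] Hmax]]; auto.
  { exists (fun _ => 0%nat). split; [intros; lia|]. intros a _ k Hk; lia. }
  destruct (Nat.eq_dec r p) as [E|Ne]; [left; subst; eauto|right].
  assert (Hrp : (r < p)%nat) by (pose proof (HPb r (ex_intro _ sel (conj Hsel Hind))); lia).
  destruct (homogeneous_system_nontrivial p (map (fun k => fun i => M i (sel k)) (seq 0 r)))
    as [w [Hw Hws]].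
  { rewrite length_map, length_seq; lia. }
  exists w; split; auto. intros j Hj.
  destruct (dependent_extension_spans p M r sel j Hind) as [b Hb].
  { intro Hc. assert (Hr1 : P (S r)).
    { exists (fun k => if (k =? r)%nat then j else sel k); split; auto.
      intros k Hk. destruct (Nat.eqb_spec k r); auto. apply Hsel; lia. }
    specialize (Hmax _ Hr1). lia. }
  rewrite (cxsum_ext p _ (fun i => cxsum r (fun k => cxmul (b k) (cxmul (M i (sel k)) (w i)))))
    by (intros i Hi; rewrite Hb, <- cxsum_mul_l by auto; apply cxsum_ext; intros; cxring).
  rewrite cxsum_swap. apply cxsum_zero. intros k Hk.
  rewrite cxsum_mul_l, (Hws (fun i => M i (sel k))); [cxring|].
  apply (in_rows (fun k i => M i (sel k))); auto.
Qed.

Lemma full_rank_of_no_left_null_vector : forall p q M,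
  (forall w : nat -> Cpx, (forall j, (j < q)%nat -> cxsum p (fun i => cxmul (w i) (M i j)) = cx0) ->
     forall i, (i < p)%nat -> w i = cx0) ->
  has_rank p q M p.
Proof.
  intros p q M H. split.
  - destruct (independent_cols_or_left_null_vector p q M) as [H1|[w [[i [Hi Hwi]] Hw]]]; auto.
    exfalso. apply Hwi. apply (H w Hw i Hi).
  - intros sel _. apply cols_dependent_if_too_many. lia.
Qed.

(** Local smallness: [f = o(g)] near [t] on [D].  Both the delta derivative
    and (with [g = 1]) continuity are instances, so linear operations on
    solutions reduce to the two closure lemmas below. *)

Definition small_near (D : R -> Prop) (t : R) (f g : R -> R) : Prop :=
  forall eps, 0 < eps -> exists del, 0 < del /\
    forall s, D s -> Rabs (s - t) < del -> f s <= eps * g s.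

Lemma small_near_comb : forall D t f1 f2 g h c1 c2,
  small_near D t f1 g -> small_near D t f2 g -> (forall s, 0 <= g s) -> 0 <= c1 -> 0 <= c2 ->
  (forall s, D s -> h s <= c1 * f1 s + c2 * f2 s) -> small_near D t h g.
Proof.
  intros D t f1 f2 g h c1 c2 H1 H2 Hg Hc1 Hc2 Hh eps Heps.
  set (c := c1 + c2 + 1).
  destruct (H1 (eps / c)) as [d1 [Hd1 H1']]; [apply Rdiv_lt_0_compat; unfold c; lra|].
  destruct (H2 (eps / c)) as [d2 [Hd2 H2']]; [apply Rdiv_lt_0_compat; unfold c; lra|].
  exists (Rmin d1 d2). split; [apply Rmin_pos; auto|]. intros s Ds Hs.
  pose proof (Rmin_l d1 d2). pose proof (Rmin_r d1 d2).
  specialize (H1' s Ds ltac:(lra)). specialize (H2' s Ds ltac:(lra)).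
  assert (Hfrac : (c1 + c2) * (eps / c) <= eps).
  { apply Rmult_le_reg_l with c; [unfold c; lra|].
    replace (c * ((c1 + c2) * (eps / c))) with ((c1 + c2) * eps) by (field; unfold c; lra).
    unfold c; nra. }
  specialize (Hg s). specialize (Hh s Ds).
  assert (c1 * f1 s <= c1 * (eps / c * g s)) by (apply Rmult_le_compat_l; auto).
  assert (c2 * f2 s <= c2 * (eps / c * g s)) by (apply Rmult_le_compat_l; auto).
  assert ((c1 + c2) * (eps / c) * g s <= eps * g s) by (apply Rmult_le_compat_r; auto).
  nra.
Qed.

Lemma small_near_dom : forall D t f g h c,
  small_near D t f g -> (forall s, 0 <= g s) -> 0 <= c ->
  (forall s, D s -> h s <= c * f s) -> small_near D t h g.
Proof.
  intros D t f g h c Hf Hg Hc Hh.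
  apply (small_near_comb D t f f g h c 0); auto; [lra|]. intros s Ds. specialize (Hh s Ds). lra.
Qed.

Lemma small_near_of_bound : forall D t f g K d0, 0 < d0 -> 0 <= K -> (forall s, 0 <= g s) ->
  (forall s, D s -> Rabs (s - t) < d0 -> f s <= K * Rabs (s - t) * g s) -> small_near D t f g.
Proof.
  intros D t f g K d0 Hd0 HK Hg Hf eps Heps.
  exists (Rmin d0 (eps / (K + 1))). split.
  { apply Rmin_pos; auto. apply Rdiv_lt_0_compat; lra. }
  intros s Ds Hs. pose proof (Rmin_l d0 (eps / (K + 1))). pose proof (Rmin_r d0 (eps / (K + 1))).
  specialize (Hf s Ds ltac:(lra)). specialize (Hg s). pose proof (Rabs_pos (s - t)).
  assert (K * Rabs (s - t) <= eps).
  { apply Rle_trans with ((K + 1) * (eps / (K + 1))); [|right; field; lra].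
    apply Rmult_le_compat; lra. }
  apply Rle_trans with (K * Rabs (s - t) * g s); auto. apply Rmult_le_compat_r; auto.
Qed.

Lemma cont_rel_small_near : forall {X : Type} (sub : X -> X -> X) nrm D (x : R -> X) t,
  cont_rel sub nrm D x t -> small_near D t (fun s => nrm (sub (x s) (x t))) (fun _ => 1).
Proof.
  intros X sub nrm D x t Hc eps Heps. destruct (Hc eps Heps) as [del [Hdel H]].
  exists del; split; auto. intros s Ds Hs. specialize (H s Ds Hs). lra.
Qed.

Lemma small_near_cont_rel : forall {X : Type} (sub : X -> X -> X) nrm D (x : R -> X) t,
  small_near D t (fun s => nrm (sub (x s) (x t))) (fun _ => 1) -> cont_rel sub nrm D x t.
Proof.
  intros X sub nrm D x t Hc eps Heps. destruct (Hc (eps / 2)) as [del [Hdel H]]; [lra|].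
  exists del; split; auto. intros s Ds Hs. specialize (H s Ds Hs). lra.
Qed.

Section ForwardJump.
Variable T : R -> Prop.
Hypothesis Hu : unbounded_above T.

Lemma jump_inf_exists : forall t, exists s, is_inf (fun r => T r /\ t < r) s.
Proof.
  intro t. destruct (Hu t) as [r0 [Hr0 Hlt]].
  set (E := fun x => T (- x) /\ t < - x).
  assert (bound E) by (exists (- t); intros x [_ Hx]; lra).
  assert (exists x, E x) by (exists (- r0); unfold E; rewrite Ropp_involutive; auto).
  destruct (completeness E H H0) as [m [Hub Hlub]].
  exists (- m). split.
  - intros r [Tr Hr]. assert (E (- r)) by (unfold E; rewrite Ropp_involutive; auto).
    specialize (Hub _ H1). lra.
  - intros s' Hs'. assert (m <= - s').
    { apply Hlub. intros x [Tx Hx]. specialize (Hs' (- x) (conj Tx Hx)). lra. }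
    lra.
Qed.

Lemma fjump_spec : forall t, is_inf (fun r => T r /\ t < r) (fjump T t).
Proof. intro t. unfold fjump. apply epsilon_spec. apply jump_inf_exists. Qed.

Lemma fjump_ge : forall t, t <= fjump T t.
Proof. intro t. destruct (fjump_spec t) as [_ H]. apply H. intros r [_ Hr]; lra. Qed.

Lemma fjump_le : forall t r, T r -> t < r -> fjump T t <= r.
Proof. intros t r Tr Hr. destruct (fjump_spec t) as [H _]. apply H; auto. Qed.

Lemma fjump_unique : forall t s, is_inf (fun r => T r /\ t < r) s -> fjump T t = s.
Proof.
  intros t s [H1 H2]. destruct (fjump_spec t) as [H3 H4].
  apply Rle_antisym; [apply H2|apply H4]; auto.
Qed.

End ForwardJump.

(** Induction principle on a time scale (as in Bohner--Peterson). *)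

Section Induction.
Variable T : R -> Prop.
Hypothesis HT : is_time_scale T.
Hypothesis Hu : unbounded_above T.

Lemma gap_outside : forall x, ~ T x -> exists e, 0 < e /\ forall s, T s -> e <= Rabs (s - x).
Proof.
  intros x Hx. destruct HT as [_ Hc].
  assert (~ (forall e, 0 < e -> exists y, T y /\ Rabs (y - x) < e)) by (intro; apply Hx; auto).
  apply not_all_ex_not in H. destruct H as [e He]. apply imply_to_and in He. destruct He as [He Hne].
  exists e; split; auto. intros s Ts. destruct (Rlt_le_dec (Rabs (s - x)) e); auto.
  exfalso; apply Hne; eauto.
Qed.

(* A left-scattered point [t > t0] is the forward jump of its predecessor,
   the supremum of [T] below [t]. *)
Lemma left_scattered_predecessor : forall t0 t e, T t0 -> T t -> t0 < t -> 0 < e ->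
  (forall s, T s -> s < t -> s <= t - e) ->
  exists rho, T rho /\ t0 <= rho < t /\ fjump T rho = t.
Proof.
  intros t0 t e Tt0 Tt Ht He Hgap.
  set (F := fun s => T s /\ t0 <= s < t).
  destruct (completeness F) as [rho [Hub Hlub]].
  { exists t; intros x [_ Hx]; lra. }
  { exists t0; split; auto; lra. }
  assert (Hrho0 : t0 <= rho) by (apply Hub; split; auto; lra).
  assert (Hrho1 : rho <= t - e) by (apply Hlub; intros x [Tx Hx]; apply Hgap; auto; lra).
  assert (Trho : T rho).
  { apply NNPP; intro Hn. destruct (gap_outside rho Hn) as [e' [He' Hfar]].
    assert (rho <= rho - e') as Hcontra; [|lra].
    apply Hlub. intros x Fx. specialize (Hub x Fx). specialize (Hfar x (proj1 Fx)).
    rewrite Rabs_left1 in Hfar; lra. }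
  exists rho. split; [auto|split; [lra|]].
  apply fjump_unique; auto. split.
  - intros r [Tr Hr]. destruct (Rlt_le_dec r t); auto.
    assert (r <= rho) by (apply Hub; split; auto; lra). lra.
  - intros s' Hs'. apply Hs'. split; auto; lra.
Qed.

(* A point [t] of [T] inherits [P] from the points of [T] in [[t0, t)]: it is
   either [t0], left-dense, or the jump of its predecessor. *)
Lemma induction_from_left : forall t0 (P : R -> Prop) t, T t0 -> P t0 ->
  (forall t, T t -> t0 <= t -> t < fjump T t -> P t -> P (fjump T t)) ->
  (forall t, T t -> t0 < t -> (forall s, T s -> t0 <= s < t -> P s) ->
     (forall e, 0 < e -> exists s, T s /\ t - e < s < t) -> P t) ->
  T t -> t0 <= t -> (forall s, T s -> t0 <= s < t -> P s) -> P t.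
Proof.
  intros t0 P t Tt0 P0 HRS HLD Tt Ht Hbelow.
  destruct (Req_dec t t0) as [->|NE]; auto.
  destruct (classic (forall e, 0 < e -> exists s, T s /\ t - e < s < t)) as [Hld|Hnld].
  - apply HLD; auto; lra.
  - apply not_all_ex_not in Hnld. destruct Hnld as [e He]. apply imply_to_and in He.
    destruct He as [He Hne].
    destruct (left_scattered_predecessor t0 t e) as [rho [Trho [Hrho Hsig]]]; auto; try lra.
    { intros s Ts Hs. destruct (Rle_lt_dec s (t - e)); auto.
      exfalso; apply Hne; exists s; split; auto; lra. }
    rewrite <- Hsig. apply HRS; auto; lra.
Qed.

Lemma time_scale_induction : forall t0 (P : R -> Prop), T t0 -> P t0 ->
  (forall t, T t -> t0 <= t -> t < fjump T t -> P t -> P (fjump T t)) ->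
  (forall t, T t -> t0 <= t -> fjump T t = t -> P t ->
     exists del, 0 < del /\ forall s, T s -> t < s < t + del -> P s) ->
  (forall t, T t -> t0 < t -> (forall s, T s -> t0 <= s < t -> P s) ->
     (forall e, 0 < e -> exists s, T s /\ t - e < s < t) -> P t) ->
  forall t, T t -> t0 <= t -> P t.
Proof.
  intros t0 P Tt0 P0 HRS HRD HLD t1 Tt1 Ht1. apply NNPP; intro Hn.
  (* [G tau]: [P] holds on [T] between [t0] and [tau]; let [ts] be its supremum. *)
  set (G := fun tau => t0 <= tau /\ forall s, T s -> t0 <= s <= tau -> P s).
  assert (G t0) by (split; [lra|]; intros s _ Hs; replace s with t0 by lra; auto).
  destruct (completeness G) as [ts [Hub Hlub]].
  { exists t1; intros tau [_ Hg]. destruct (Rle_lt_dec tau t1); auto.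
    exfalso; apply Hn; apply Hg; auto; lra. }
  { eauto. }
  assert (Hts0 : t0 <= ts) by (apply Hub; auto).
  assert (Hbelow : forall s, T s -> t0 <= s < ts -> P s).
  { intros s Ts Hs. apply NNPP; intro Hns.
    assert (ts <= s); [|lra]. apply Hlub. intros tau [Ht Hg].
    destruct (Rle_lt_dec tau s); auto. exfalso; apply Hns; apply Hg; auto; lra. }
  assert (Hbeyond : forall tau, ts < tau -> ~ (forall s, T s -> ts <= s <= tau -> P s)).
  { intros tau Htau Hs. assert (G tau) by (split; [lra|]; intros s Ts Hs';
      destruct (Rlt_le_dec s ts); [apply Hbelow|apply Hs]; auto; lra).
    specialize (Hub _ H0). lra. }
  destruct (classic (T ts)) as [Tts|NTts].
  - assert (Pts : P ts) by (apply (induction_from_left t0); auto).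
    pose proof (fjump_ge T Hu ts) as Hsg.
    destruct (Req_dec (fjump T ts) ts) as [E|NE].
    + destruct (HRD ts Tts Hts0 E Pts) as [del [Hdel Hd]].
      apply (Hbeyond (ts + del / 2)); [lra|]. intros s Ts Hs.
      destruct (Req_dec s ts) as [->|]; auto. apply Hd; auto; lra.
    + apply (Hbeyond (fjump T ts)); [lra|]. intros s Ts Hs.
      destruct (Req_dec s ts) as [->|]; auto.
      pose proof (fjump_le T Hu ts s Ts ltac:(lra)). replace s with (fjump T ts) by lra.
      apply HRS; auto; lra.
  - destruct (gap_outside ts NTts) as [e [He Hfar]].
    apply (Hbeyond (ts + e / 2)); [lra|]. intros s Ts Hs.
    specialize (Hfar s Ts). destruct (Req_dec s ts) as [->|]; [contradiction|].
    rewrite Rabs_right in Hfar; lra.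
Qed.

End Induction.

Lemma le_all_eps : forall x c, (forall e, 0 < e -> x <= e * c) -> 0 <= c -> x <= 0.
Proof.
  intros x c H Hc. apply le_epsilon. intros e He.
  destruct (Req_dec c 0). { subst. specialize (H 1 Rlt_0_1). lra. }
  assert (0 < c) by lra. specialize (H (e / c) (Rdiv_lt_0_compat _ _ He H1)).
  replace (e / c * c) with e in H by (field; lra). lra.
Qed.

Lemma cx_delta_step : forall T D (x : R -> Cpx) t v,
  D t -> delta_deriv_at cxsub cxscal cxnorm T D x t v -> t <= fjump T t ->
  x (fjump T t) = cxadd (x t) (cxscal (fjump T t - t) v).
Proof.
  intros T D x t v Dt Hder Hsg.
  assert (Hres : cxnorm (cxsub (cxsub (x (fjump T t)) (x t)) (cxscal (fjump T t - t) v)) <= 0).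
  { apply (le_all_eps _ (fjump T t - t)); [|lra]. intros eps Heps.
    destruct (Hder eps Heps) as [del [Hdel Hdd]].
    specialize (Hdd t Dt). rewrite Rminus_diag, Rabs_R0 in Hdd.
    rewrite Rabs_right in Hdd by lra. apply Hdd; auto. }
  pose proof (cxn_ge0 (cxsub (cxsub (x (fjump T t)) (x t)) (cxscal (fjump T t - t) v))).
  assert (Hz : cxsub (cxsub (x (fjump T t)) (x t)) (cxscal (fjump T t - t) v) = cx0)
    by (apply cxn_eq0; lra).
  clear Hres. rename Hz into Hres. destruct (x (fjump T t)), (x t), v. cxsimpl.
  injection Hres; intros. apply cx_eq; simpl; lra.
Qed.

Lemma exp_monotone : forall x y, x <= y -> exp x <= exp y.
Proof. intros x y H. destruct (Req_dec x y) as [->|]; [lra|]. left; apply exp_increasing; lra. Qed.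

Section ScalarUniqueness.
Variable T : R -> Prop.
Hypothesis HT : is_time_scale T.
Hypothesis Hu : unbounded_above T.
Variables (lam : Cpx) (t0 : R) (d : R -> Cpx).
Hypothesis Tt0 : T t0.
Hypothesis Hd : cx_solution T lam t0 cx0 d.

(* Gronwall comparison function [exp (L (s - t0))] with [L > |lam|, L >= 1]. *)
Let L := cxnorm lam + 1.
Let growth (s : R) := exp (L * (s - t0)).

Lemma growth_ge1 : forall s, t0 <= s -> 1 <= growth s.
Proof.
  intros s Hs. unfold growth. rewrite <- exp_0. apply exp_monotone.
  pose proof (cxn_ge0 lam). apply Rmult_le_pos; unfold L; lra.
Qed.

Lemma growth_step : forall s h, 0 <= h -> growth s * (1 + L * h) <= growth (s + h).
Proof.
  intros s h Hh. unfold growth. replace (L * (s + h - t0)) with (L * (s - t0) + L * h) by ring.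
  rewrite exp_plus. apply Rmult_le_compat_l; [left; apply exp_pos|]. apply exp_ineq1_le.
Qed.

Lemma growth_mono : forall s u, s <= u -> growth s <= growth u.
Proof.
  intros s u Hsu. unfold growth. apply exp_monotone. pose proof (cxn_ge0 lam).
  apply Rmult_le_compat_l; unfold L; lra.
Qed.

(* For every [e > 0], [|d s| <= e (growth s - 1)]: the three induction steps. *)
Let bound (e s : R) := cxnorm (d s) <= e * (growth s - 1).

Lemma bound_right_scattered : forall e t, 0 < e -> T t -> t0 <= t -> t < fjump T t ->
  bound e t -> bound e (fjump T t).
Proof.
  intros e t He Tt Ht Hlt Pt. unfold bound in *. destruct Hd as [_ Hsol].
  destruct (Hsol t (conj Tt Ht)) as [_ Hder].
  rewrite (cx_delta_step T (dom T t0) d t (cxmul lam (d t)) (conj Tt Ht) Hder ltac:(lra)).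
  set (mu := fjump T t - t) in *.
  eapply Rle_trans; [apply cxn_tri|]. rewrite cxn_scal, cxn_mul, Rabs_right by (unfold mu; lra).
  pose proof (growth_step t mu ltac:(unfold mu; lra)) as Hg.
  replace (t + mu) with (fjump T t) in Hg by (unfold mu; ring).
  pose proof (growth_ge1 t Ht). pose proof (cxn_ge0 (d t)). pose proof (cxn_ge0 lam).
  assert (0 <= mu) by (unfold mu; lra).
  assert (cxnorm (d t) * (1 + mu * cxnorm lam) <= e * (growth t - 1) * (1 + mu * cxnorm lam))
    by (apply Rmult_le_compat_r; [nra|auto]).
  assert ((growth t - 1) * (1 + mu * cxnorm lam) <= growth (fjump T t) - 1) by (unfold L in Hg; nra).
  assert (e * ((growth t - 1) * (1 + mu * cxnorm lam)) <= e * (growth (fjump T t) - 1))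
    by (apply Rmult_le_compat_l; lra).
  nra.
Qed.

Lemma bound_right_dense : forall e t, 0 < e -> T t -> t0 <= t -> fjump T t = t -> bound e t ->
  exists del, 0 < del /\ forall s, T s -> t < s < t + del -> bound e s.
Proof.
  intros e t He Tt Ht Hrd Pt. unfold bound in *. destruct Hd as [_ Hsol].
  destruct (Hsol t (conj Tt Ht)) as [_ Hder].
  destruct (Hder e He) as [del [Hdel Hdd]]. exists del; split; auto.
  intros s Ts Hs. assert (Ds : dom T t0 s) by (split; [auto|lra]).
  specialize (Hdd s Ds). rewrite Hrd in Hdd.
  rewrite (Rabs_right (s - t)) in Hdd by lra. rewrite (Rabs_left (t - s)) in Hdd by lra.
  specialize (Hdd ltac:(lra)).
  set (res := cxsub (cxsub (d t) (d s)) (cxscal (t - s) (cxmul lam (d t)))) in *.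
  replace (d s) with (cxsub (cxsub (d t) (cxscal (t - s) (cxmul lam (d t)))) res)
    by (unfold res; destruct (d s), (d t), lam; apply cx_eq; simpl; ring).
  eapply Rle_trans; [apply cxn_sub_tri|].
  eapply Rle_trans; [apply Rplus_le_compat_r; apply cxn_sub_tri|].
  rewrite cxn_scal, cxn_mul, Rabs_left by lra.
  set (h := s - t) in *. replace (- (t - s)) with h in * by (unfold h; ring).
  pose proof (growth_step t h ltac:(unfold h; lra)) as Hg. replace (t + h) with s in Hg by (unfold h; ring).
  pose proof (growth_ge1 t Ht). pose proof (cxn_ge0 (d t)). pose proof (cxn_ge0 lam).
  assert (0 <= h) by (unfold h; lra).
  assert (cxnorm (d t) * (1 + h * cxnorm lam) <= e * (growth t - 1) * (1 + h * cxnorm lam))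
    by (apply Rmult_le_compat_r; [nra|auto]).
  assert ((growth t - 1) * (1 + h * cxnorm lam) + h <= growth s - 1) by (unfold L in Hg; nra).
  assert (e * ((growth t - 1) * (1 + h * cxnorm lam) + h) <= e * (growth s - 1))
    by (apply Rmult_le_compat_l; lra).
  nra.
Qed.

Lemma bound_left_dense : forall e t, 0 < e -> T t -> t0 < t -> (forall s, T s -> t0 <= s < t -> bound e s) ->
  (forall r, 0 < r -> exists s, T s /\ t - r < s < t) -> bound e t.
Proof.
  intros e t He Tt Ht Hbef Hld. unfold bound in *. apply le_epsilon. intros eta Heta.
  destruct Hd as [_ Hsol]. assert (Dt : dom T t0 t) by (split; [auto|lra]).
  destruct (Hsol t Dt) as [Hc _].
  destruct (Hc eta Heta) as [del [Hdel Hcc]].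
  destruct (Hld (Rmin del (t - t0)) ltac:(apply Rmin_pos; lra)) as [s [Ts Hs]].
  pose proof (Rmin_l del (t - t0)). pose proof (Rmin_r del (t - t0)).
  assert (Ds : dom T t0 s) by (split; [auto|lra]).
  specialize (Hcc s Ds). rewrite Rabs_left in Hcc by lra. specialize (Hcc ltac:(lra)).
  specialize (Hbef s Ts ltac:(lra)).
  replace (d t) with (cxsub (d s) (cxsub (d s) (d t))) by (destruct (d s), (d t); apply cx_eq; simpl; ring).
  eapply Rle_trans; [apply cxn_sub_tri|].
  pose proof (growth_mono s t ltac:(lra)). nra.
Qed.

Lemma cx_solution_from_zero : forall t, T t -> t0 <= t -> d t = cx0.
Proof.
  intros t Tt Htt. apply cxn_eq0. apply Rle_antisym; [|apply cxn_ge0].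
  apply (le_all_eps _ (growth t - 1)); [|pose proof (growth_ge1 t Htt); lra].
  intros e He. revert t Tt Htt.
  apply (time_scale_induction T HT Hu t0 (bound e)); auto.
  - unfold bound. destruct Hd as [-> _]. rewrite cxn_0. pose proof (growth_ge1 t0 (Rle_refl _)). nra.
  - intros; apply bound_right_scattered; auto.
  - intros; apply bound_right_dense; auto.
  - intros; apply bound_left_dense; auto.
Qed.

End ScalarUniqueness.

Lemma cx_solution_lincomb : forall T lam t0 a b z1 z2 c1 c2,
  cx_solution T lam t0 a z1 -> cx_solution T lam t0 b z2 ->
  cx_solution T lam t0 (cxadd (cxmul c1 a) (cxmul c2 b))
    (fun t => cxadd (cxmul c1 (z1 t)) (cxmul c2 (z2 t))).
Proof.
  intros T lam t0 a b z1 z2 c1 c2 [H10 H1] [H20 H2]. split; [rewrite H10, H20; auto|].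
  intros t Ht. destruct (H1 t Ht) as [Hc1 Hd1]. destruct (H2 t Ht) as [Hc2 Hd2].
  pose proof (cxn_ge0 c1). pose proof (cxn_ge0 c2). split.
  - apply small_near_cont_rel.
    apply (small_near_comb _ _ (fun s => cxnorm (cxsub (z1 s) (z1 t))) (fun s => cxnorm (cxsub (z2 s) (z2 t)))
      _ _ (cxnorm c1) (cxnorm c2)); try apply cont_rel_small_near; auto; [intros; lra|].
    intros s _. rewrite <- !cxn_mul. eapply Rle_trans; [|apply cxn_tri]. right; apply f_equal; cxring.
  - set (sg := fjump T t).
    apply (small_near_comb _ _
      (fun s => cxnorm (cxsub (cxsub (z1 sg) (z1 s)) (cxscal (sg - s) (cxmul lam (z1 t)))))
      (fun s => cxnorm (cxsub (cxsub (z2 sg) (z2 s)) (cxscal (sg - s) (cxmul lam (z2 t)))))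
      (fun s => Rabs (sg - s)) _ (cxnorm c1) (cxnorm c2)); auto; [intros; apply Rabs_pos|].
    intros s _. rewrite <- !cxn_mul. eapply Rle_trans; [|apply cxn_tri].
    right; apply f_equal. unfold sg; cxring.
Qed.

(** Riemann integrability of monotone functions, by uniform approximation
    with staircases (finite sums of monotone 0/1-valued functions). *)

(* A nondecreasing 0/1-valued function is a single step, hence integrable. *)
Lemma ex_RInt_step : forall (f : R -> R) a b, a <= b ->
  (forall x, f x = 0 \/ f x = 1) -> (forall x y, x <= y -> f x <= f y) -> ex_RInt f a b.
Proof.
  intros f a b Hab H01 Hm.
  set (Z := fun x => x <= b /\ (x <= a \/ f x = 0)).
  destruct (completeness Z) as [c [Hub Hlub]].
  { exists b; intros x [Hx _]; auto. }
  { exists a; split; [auto|left; lra]. }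
  assert (Hac : a <= c) by (apply Hub; split; [auto|left; lra]).
  assert (Hcb : c <= b) by (apply Hlub; intros x [Hx _]; auto).
  apply ex_RInt_Chasles with c.
  - apply ex_RInt_ext with (fun _ => 0); [|apply ex_RInt_const].
    intros x Hx. rewrite Rmin_left in Hx by lra. rewrite Rmax_right in Hx by lra.
    apply NNPP; intro Hn. assert (c <= x); [|lra].
    apply Hlub. intros y [Hy1 Hy2]. destruct (Rle_lt_dec y x); auto.
    destruct Hy2 as [Hy2|Hy2]; [lra|]. pose proof (Hm x y ltac:(lra)). destruct (H01 x); [congruence|lra].
  - apply ex_RInt_ext with (fun _ => 1); [|apply ex_RInt_const].
    intros x Hx. rewrite Rmin_left in Hx by lra. rewrite Rmax_right in Hx by lra.
    destruct (H01 x) as [E|E]; auto. exfalso.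
    assert (Z x) by (split; [lra|right; auto]). specialize (Hub x H). lra.
Qed.

Fixpoint stair_count (d y : R) (N : nat) : R :=
  match N with
  | O => 0
  | S N' => stair_count d y N' + (if Rle_dec (INR N * d) y then 1 else 0)
  end.

Lemma stair_count_spec : forall d y N, 0 < d -> 0 <= y ->
  stair_count d y N * d <= y /\ (stair_count d y N = INR N \/ y < (stair_count d y N + 1) * d) /\
  stair_count d y N <= INR N.
Proof.
  intros d y N Hd Hy. induction N; [simpl; split; [lra|split; [left; auto|lra]]|].
  destruct IHN as [H1 [H2 H3]].
  change (stair_count d y (S N)) with (stair_count d y N + (if Rle_dec (INR (S N) * d) y then 1 else 0)).
  destruct (Rle_dec (INR (S N) * d) y) as [Hle|Hgt]; rewrite S_INR in *.
  - assert (stair_count d y N = INR N).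
    { destruct H2 as [H2|H2]; auto. exfalso.
      assert ((INR N + 1) * d < (stair_count d y N + 1) * d) by lra.
      apply Rmult_lt_reg_r in H; lra. }
    rewrite H. split; [nra|split; [left; auto|lra]].
  - rewrite Rplus_0_r. split; auto. split; [|lra].
    destruct H2 as [H2|H2]; right; [rewrite H2; lra|auto].
Qed.

Lemma stair_approx : forall d y N, 0 < d -> 0 <= y -> y < INR (S N) * d ->
  Rabs (d * stair_count d y (S N) - y) < d.
Proof.
  intros d y N Hd Hy HyN. destruct (stair_count_spec d y (S N) Hd Hy) as [H1 [H2 _]].
  assert (y < (stair_count d y (S N) + 1) * d) by (destruct H2 as [->|H2]; auto; lra).
  rewrite Rabs_left1; nra.
Qed.

Lemma ex_RInt_stair : forall (G : R -> R) d y0 a b N, a <= b ->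
  (forall x y, x <= y -> G x <= G y) -> ex_RInt (fun x => stair_count d (G x - y0) N) a b.
Proof.
  intros G d y0 a b N Hab HG. induction N; [simpl; apply ex_RInt_const|].
  apply ex_RInt_ext with (fun x => stair_count d (G x - y0) N +
      (if Rle_dec (INR (S N) * d) (G x - y0) then 1 else 0)); [reflexivity|].
  apply (ex_RInt_plus (V := R_NormedModule)); auto. apply ex_RInt_step; auto.
  - intro x. destruct (Rle_dec _ _); auto.
  - intros x y Hxy. pose proof (HG x y Hxy).
    destruct (Rle_dec (INR (S N) * d) (G x - y0)); destruct (Rle_dec (INR (S N) * d) (G y - y0)); lra.
Qed.

Lemma eventually_small_step : forall D eps, 0 < D -> 0 < eps ->
  exists N0, forall N, (N0 <= N)%nat -> D / INR (S N) <= eps.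
Proof.
  intros D eps HD Heps. destruct (archimed (D / eps)) as [Hup _].
  assert (0 <= up (D / eps))%Z by (apply le_IZR; pose proof (Rdiv_lt_0_compat _ _ HD Heps); lra).
  exists (Z.to_nat (up (D / eps))). intros N HN.
  assert (HN' : D / eps < INR (S N)).
  { rewrite S_INR. apply le_INR in HN. rewrite INR_IZR_INZ, Z2Nat.id in HN by auto. lra. }
  apply Rmult_lt_compat_r with (r := eps) in HN'; auto.
  replace (D / eps * eps) with D in HN' by (field; lra).
  apply Rle_div_l; [apply lt_0_INR; lia|]. lra.
Qed.

Lemma ex_RInt_mono : forall (g : R -> R) a b, a <= b ->
  (forall x y, a <= x -> x <= y -> y <= b -> g x <= g y) -> ex_RInt g a b.
Proof.
  intros g a b Hab Hm.
  (* [G] extends [g] constantly outside [a, b], to a globally nondecreasing function. *)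
  set (cl := fun x => Rmax a (Rmin b x)).
  assert (Hcl : forall x, a <= cl x <= b).
  { intro x. unfold cl. split; [apply Rmax_l|]. apply Rmax_lub; [lra|apply Rmin_l]. }
  set (G := fun x => g (cl x)).
  assert (HGm : forall x y, x <= y -> G x <= G y).
  { intros x y Hxy. unfold G. pose proof (Hcl x); pose proof (Hcl y). apply Hm; try lra.
    unfold cl. apply Rle_max_compat_l, Rle_min_compat_l; auto. }
  assert (HGb : forall x, g a <= G x <= g b) by (intro x; unfold G; pose proof (Hcl x); split; apply Hm; lra).
  set (D := g b - g a + 1).
  assert (HD : 0 < D) by (unfold D; pose proof (Hm a b ltac:(lra) Hab ltac:(lra)); lra).
  set (del := fun N : nat => D / INR (S N)).
  assert (Hdel : forall N, 0 < del N) by (intro N; apply Rdiv_lt_0_compat; auto; apply lt_0_INR; lia).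
  (* Staircase approximants with step [del N], uniformly within [del N] of [G]. *)
  set (f := fun (N : nat) x => g a + del N * stair_count (del N) (G x - g a) (S N)).
  assert (Hfint : forall N, is_RInt (f N) a b (RInt (f N) a b)).
  { intro N. apply (RInt_correct (V := R_CompleteNormedModule)). unfold f.
    apply (ex_RInt_plus (V := R_NormedModule) (fun _ => g a)); [apply ex_RInt_const|].
    apply (ex_RInt_scal (V := R_NormedModule)). apply ex_RInt_stair; auto. }
  assert (Hunif : forall N x, Rabs (f N x - G x) < del N).
  { intros N x. unfold f. pose proof (HGb x).
    replace (g a + del N * stair_count (del N) (G x - g a) (S N) - G x)
      with (del N * stair_count (del N) (G x - g a) (S N) - (G x - g a)) by ring.
    apply stair_approx; [auto|lra|]. unfold del. field_simplify; [unfold D; lra|]. apply not_0_INR; lia. }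
  destruct (filterlim_RInt (V := R_CompleteNormedModule) f a b eventually _ G
    (fun N => RInt (f N) a b) Hfint) as [If [_ HIf]].
  - intros P [eps HP]. destruct (eventually_small_step D eps HD (cond_pos eps)) as [N0 HN0].
    exists N0. intros N HN. apply HP. intro x. change (Rabs (f N x - G x) < eps).
    eapply Rlt_le_trans; [apply Hunif|]. apply HN0; auto.
  - apply ex_RInt_ext with G; [|exists If; auto].
    intros x Hx. rewrite Rmin_left in Hx by lra. rewrite Rmax_right in Hx by lra.
    unfold G, cl. rewrite Rmin_right by lra. rewrite Rmax_right by lra. auto.
Qed.

(** Generalized monomials on a time scale.  With [last_point T t0 r] the last
    point of [T] in [[t0, r]], set [h_0 = 1] and
    [h_(k+1)(r) = int_(t0)^r h_k(last_point u) du].  Then [0 <= h_k(r) <=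
    (r - t0)^k / k!], and on [T] the function [h_(k+1)] is a delta
    antiderivative of [h_k] ([gmono_increment], [integrand_near]). *)

Definition last_point (T : R -> Prop) (t0 r : R) : R :=
  epsilon (inhabits 0) (fun m => is_lub (fun s => T s /\ t0 <= s /\ s <= Rmax t0 r) m).

Fixpoint gmono (T : R -> Prop) (t0 : R) (k : nat) (r : R) : R :=
  match k with O => 1 | S j => RInt (fun u => gmono T t0 j (last_point T t0 u)) t0 r end.

Definition poly_mono (t0 : R) (k : nat) (x : R) : R := (x - t0) ^ k / INR (Factorial.fact k).

Lemma RInt_const_R : forall c a b, RInt (fun _ => c) a b = (b - a) * c.
Proof.
  intros. rewrite (RInt_const (V := R_CompleteNormedModule)).
  simpl. unfold scal; simpl; unfold mult; simpl. ring.
Qed.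

Lemma RInt_dev_bound : forall f a b c M, a <= b -> ex_RInt f a b ->
  (forall u, a < u < b -> Rabs (f u - c) <= M) -> Rabs (RInt f a b - (b - a) * c) <= (b - a) * M.
Proof.
  intros f a b c M Hab Hf HM. rewrite <- (RInt_const_R c), <- (RInt_const_R M).
  replace (RInt f a b - RInt (fun _ => c) a b) with (RInt (fun u => f u - c) a b)
    by (rewrite (RInt_minus (V := R_CompleteNormedModule)); [reflexivity|auto|apply ex_RInt_const]).
  assert (Hi : ex_RInt (fun u => f u - c) a b)
    by (apply (ex_RInt_minus (V := R_NormedModule)); [auto|apply ex_RInt_const]).
  apply Rabs_le. split.
  - replace (- RInt (fun _ => M) a b) with (RInt (fun _ => - M) a b) by (rewrite !RInt_const_R; lra).
    apply RInt_le; auto; [apply ex_RInt_const|].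
    intros u Hu0. specialize (HM u Hu0). apply Rabs_le_between in HM. lra.
  - apply RInt_le; auto; [apply ex_RInt_const|].
    intros u Hu0. specialize (HM u Hu0). apply Rabs_le_between in HM. lra.
Qed.

Section GeneralizedMonomials.
Variable T : R -> Prop.
Variable t0 : R.
Hypothesis Tt0 : T t0.
Hypothesis Hu : unbounded_above T.

Local Notation integrand k := (fun u => gmono T t0 k (last_point T t0 u)).

Lemma last_point_lub : forall r, is_lub (fun s => T s /\ t0 <= s /\ s <= Rmax t0 r) (last_point T t0 r).
Proof.
  intro r. unfold last_point. apply epsilon_spec.
  destruct (completeness (fun s => T s /\ t0 <= s /\ s <= Rmax t0 r)) as [m Hm].
  - exists (Rmax t0 r). intros x [_ [_ H]]; auto.
  - exists t0. split; auto. split; [lra|apply Rmax_l].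
  - exists m; auto.
Qed.

Lemma last_point_ge : forall r s, T s -> t0 <= s -> s <= r -> s <= last_point T t0 r.
Proof.
  intros r s Ts H1 H2. destruct (last_point_lub r) as [H _]. apply H.
  split; auto. split; auto. eapply Rle_trans; [apply H2|apply Rmax_r].
Qed.

Lemma last_point_t0 : forall r, t0 <= last_point T t0 r.
Proof.
  intro r. destruct (last_point_lub r) as [H _]. apply H. split; auto. split; [lra|apply Rmax_l].
Qed.

Lemma last_point_le : forall r, last_point T t0 r <= Rmax t0 r.
Proof. intro r. destruct (last_point_lub r) as [_ H]. apply H. intros x [_ [_ Hx]]; auto. Qed.

Lemma last_point_mono : forall x y, x <= y -> last_point T t0 x <= last_point T t0 y.
Proof.
  intros x y Hxy. destruct (last_point_lub x) as [_ H]. apply H. intros s [Ts [Hs1 Hs2]].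
  destruct (last_point_lub y) as [H' _]. apply H'. split; auto. split; auto.
  eapply Rle_trans; [apply Hs2|]. apply Rle_max_compat_l; auto.
Qed.

Lemma last_point_gap : forall t r, T t -> t0 <= t -> t <= r -> r < fjump T t -> last_point T t0 r = t.
Proof.
  intros t r Tt H1 H2 H3. apply Rle_antisym; [|apply last_point_ge; auto].
  destruct (last_point_lub r) as [_ H]. apply H. intros s [Ts [Hs1 Hs2]].
  rewrite Rmax_right in Hs2 by lra.
  destruct (Rle_lt_dec s t); auto.
  pose proof (fjump_le T Hu t s Ts r0). lra.
Qed.

Lemma last_point_near : forall t s u, T t -> t0 <= t -> T s -> t0 <= s ->
  (s <= t \/ fjump T t = t) -> Rmin s (fjump T t) < u < Rmax s (fjump T t) ->
  Rabs (last_point T t0 u - t) <= Rabs (s - t).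
Proof.
  intros t s u Tt Ht Ts Hs Hcase Hu0. pose proof (fjump_ge T Hu t) as Hsg.
  assert (Hlp_le : last_point T t0 u <= u).
  { eapply Rle_trans; [apply last_point_le|]. rewrite Rmax_right; [lra|].
    assert (t0 <= Rmin s (fjump T t)) by (apply Rmin_glb; lra). lra. }
  destruct (Rle_lt_dec s t) as [Hst|Hts].
  - rewrite Rmin_left, Rmax_right in Hu0 by lra.
    destruct (Rle_lt_dec u t).
    + pose proof (last_point_ge u s Ts Hs ltac:(lra)).
      rewrite !Rabs_left1 by lra. lra.
    + rewrite (last_point_gap t u Tt Ht ltac:(lra) ltac:(lra)), Rminus_diag, Rabs_R0. apply Rabs_pos.
  - destruct Hcase as [|Hrd]; [lra|]. rewrite Hrd in Hu0.
    rewrite Rmin_right, Rmax_left in Hu0 by lra.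
    pose proof (last_point_ge u t Tt Ht ltac:(lra)).
    rewrite !Rabs_right by lra. lra.
Qed.

Lemma gmono_int_aux : forall k, (forall x y, t0 <= x -> x <= y -> gmono T t0 k x <= gmono T t0 k y) ->
  forall a b, a <= b -> ex_RInt (integrand k) a b.
Proof.
  intros k Hm a b Hab. apply ex_RInt_mono; auto. intros x y _ Hxy _.
  apply Hm; [apply last_point_t0|apply last_point_mono; auto].
Qed.

Lemma gmono_mono_nonneg : forall k,
  (forall x y, t0 <= x -> x <= y -> gmono T t0 k x <= gmono T t0 k y) /\
  (forall x, t0 <= x -> 0 <= gmono T t0 k x).
Proof.
  induction k as [|k [IHm IHn0]]; [simpl; split; intros; lra|].
  assert (Hint := gmono_int_aux k IHm).
  assert (Hpos : forall x y, x <= y -> 0 <= RInt (integrand k) x y).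
  { intros x y Hxy. apply RInt_ge_0; auto. intros u _. apply IHn0, last_point_t0. }
  split; [|intros x Hx; apply Hpos; auto].
  intros x y Hx Hxy. simpl.
  rewrite <- (RInt_Chasles (V := R_CompleteNormedModule) _ t0 x y) by (apply Hint; lra).
  change (RInt (integrand k) t0 x <= RInt (integrand k) t0 x + RInt (integrand k) x y).
  pose proof (Hpos x y Hxy). lra.
Qed.

Lemma gmono_mono : forall k x y, t0 <= x -> x <= y -> gmono T t0 k x <= gmono T t0 k y.
Proof. intro k. apply (gmono_mono_nonneg k). Qed.

Lemma gmono_nonneg : forall k x, t0 <= x -> 0 <= gmono T t0 k x.
Proof. intro k. apply (gmono_mono_nonneg k). Qed.

Lemma gmono_int : forall k a b, ex_RInt (integrand k) a b.
Proof.
  intros k a b. destruct (Rle_lt_dec a b).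
  - apply gmono_int_aux; auto. apply gmono_mono.
  - apply ex_RInt_swap. apply gmono_int_aux; [apply gmono_mono|lra].
Qed.

Lemma gmono_diff : forall k a b, gmono T t0 (S k) b - gmono T t0 (S k) a = RInt (integrand k) a b.
Proof.
  intros k a b. simpl.
  rewrite <- (RInt_Chasles (V := R_CompleteNormedModule) _ t0 a b) by apply gmono_int.
  change (RInt (integrand k) t0 a + RInt (integrand k) a b - RInt (integrand k) t0 a
    = RInt (integrand k) a b). ring.
Qed.

Lemma gmono_t0 : forall k, gmono T t0 k t0 = match k with O => 1 | S _ => 0 end.
Proof. intros [|k]; simpl; auto. apply (RInt_point (V := R_CompleteNormedModule)). Qed.

Lemma poly_mono_deriv : forall k u, is_derive (poly_mono t0 (S k)) u (poly_mono t0 k u).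
Proof.
  intros k u. unfold poly_mono. auto_derive; auto.
  change (match k with 0%nat => 1 | S _ => INR k + 1 end) with (INR (S k)).
  replace (Factorial.fact k + k * Factorial.fact k)%nat with (S k * Factorial.fact k)%nat by (simpl; lia).
  rewrite mult_INR. pose proof (INR_fact_neq_0 k). assert (INR (S k) <> 0) by (apply not_0_INR; lia).
  replace (u + - t0) with (u - t0) by ring. field; auto.
Qed.

Lemma poly_mono_int : forall k x, RInt (poly_mono t0 k) t0 x = poly_mono t0 (S k) x.
Proof.
  intros k x. replace (poly_mono t0 (S k) x) with (poly_mono t0 (S k) x - poly_mono t0 (S k) t0)
    by (unfold poly_mono; simpl; rewrite Rminus_diag, Rmult_0_l; unfold Rdiv; ring).
  apply (is_RInt_unique (V := R_CompleteNormedModule)).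
  apply (is_RInt_derive (V := R_CompleteNormedModule) (poly_mono t0 (S k))).
  - intros; apply poly_mono_deriv.
  - intros z _. apply (ex_derive_continuous (V := R_NormedModule)). unfold poly_mono. auto_derive. auto.
Qed.

Lemma poly_mono_nonneg : forall k x, t0 <= x -> 0 <= poly_mono t0 k x.
Proof. intros. unfold poly_mono. apply Rdiv_le_0_compat; [apply pow_le; lra|apply INR_fact_lt_0]. Qed.

Lemma poly_mono_mono : forall k x y, t0 <= x -> x <= y -> poly_mono t0 k x <= poly_mono t0 k y.
Proof.
  intros. unfold poly_mono. apply Rmult_le_compat_r.
  - left; apply Rinv_0_lt_compat, INR_fact_lt_0.
  - apply pow_incr; lra.
Qed.

Lemma gmono_bound : forall k x, t0 <= x -> gmono T t0 k x <= poly_mono t0 k x.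
Proof.
  induction k; intros x Hx; [unfold poly_mono; simpl; lra|].
  simpl. rewrite <- poly_mono_int. apply RInt_le; auto; [apply gmono_int| |].
  - apply (ex_RInt_continuous (V := R_CompleteNormedModule)). intros z _.
    apply (ex_derive_continuous (V := R_NormedModule)). unfold poly_mono. auto_derive. auto.
  - intros u Hu0. eapply Rle_trans; [|apply IHk; lra].
    apply gmono_mono; [apply last_point_t0|]. eapply Rle_trans; [apply last_point_le|].
    rewrite Rmax_right; lra.
Qed.

(* Increment of [h_(k+1)] over [[a, b]] versus [(b - a) c], when [h_k] stays
   within [M] of [c] along the way: the integral form of the delta derivative. *)
Lemma gmono_increment : forall k a b c M, t0 <= a -> t0 <= b ->
  (forall u, Rmin a b < u < Rmax a b -> Rabs (gmono T t0 k (last_point T t0 u) - c) <= M) ->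
  Rabs (gmono T t0 (S k) b - gmono T t0 (S k) a - (b - a) * c) <= Rabs (b - a) * M.
Proof.
  intros k a b c M Ha Hb HM. destruct (Rle_lt_dec a b).
  - rewrite gmono_diff, (Rabs_right (b - a)) by lra. apply RInt_dev_bound; auto; [apply gmono_int|].
    intros u Hu0. apply HM. rewrite Rmin_left, Rmax_right; lra.
  - replace (gmono T t0 (S k) b - gmono T t0 (S k) a - (b - a) * c)
      with (- (gmono T t0 (S k) a - gmono T t0 (S k) b - (a - b) * c)) by ring.
    rewrite Rabs_Ropp, gmono_diff, (Rabs_left (b - a)) by lra. replace (- (b - a)) with (a - b) by ring.
    apply RInt_dev_bound; [lra|apply gmono_int|].
    intros u Hu0. apply HM. rewrite Rmin_right, Rmax_left; lra.
Qed.

(* Lipschitz constant of [h_k] on [[t0, B]]. *)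
Definition lip_bound (k : nat) (B : R) : R := match k with O => 0 | S j => poly_mono t0 j B end.

Lemma lip_bound_nonneg : forall k B, t0 <= B -> 0 <= lip_bound k B.
Proof. intros [|k] B HB; simpl; [lra|apply poly_mono_nonneg; auto]. Qed.

Lemma gmono_lip : forall k x y B, t0 <= x -> t0 <= y -> x <= B -> y <= B ->
  Rabs (gmono T t0 k x - gmono T t0 k y) <= lip_bound k B * Rabs (x - y).
Proof.
  intros [|k] x y B Hx Hy HxB HyB; [simpl; rewrite Rminus_diag, Rabs_R0; lra|].
  rewrite Rmult_comm.
  replace (gmono T t0 (S k) x - gmono T t0 (S k) y)
    with (gmono T t0 (S k) x - gmono T t0 (S k) y - (x - y) * 0) by ring.
  apply gmono_increment; auto. intros u Hu0. simpl lip_bound. rewrite Rminus_0_r.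
  assert (Hlp : t0 <= last_point T t0 u <= B).
  { split; [apply last_point_t0|]. eapply Rle_trans; [apply last_point_le|].
    assert (Rmax y x <= B) by (apply Rmax_lub; lra). apply Rmax_lub; lra. }
  rewrite Rabs_right by (apply Rle_ge, gmono_nonneg; lra).
  eapply Rle_trans; [apply gmono_bound; lra|]. apply poly_mono_mono; lra.
Qed.

Lemma integrand_near : forall t s B k u, T t -> t0 <= t -> T s -> t0 <= s ->
  (s <= t \/ fjump T t = t) -> fjump T t <= B -> s <= B ->
  Rmin s (fjump T t) < u < Rmax s (fjump T t) ->
  Rabs (gmono T t0 k (last_point T t0 u) - gmono T t0 k t) <= lip_bound k B * Rabs (s - t).
Proof.
  intros t s B k u Tt Ht Ts Hs Hcase HsgB HsB Hu0. pose proof (fjump_ge T Hu t).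
  assert (Hu1 : t0 <= u <= B).
  { split; [assert (t0 <= Rmin s (fjump T t)) by (apply Rmin_glb; lra); lra|].
    assert (Rmax s (fjump T t) <= B) by (apply Rmax_lub; lra); lra. }
  assert (HpB : last_point T t0 u <= B)
    by (eapply Rle_trans; [apply last_point_le|]; rewrite Rmax_right; lra).
  apply (Rle_trans _ (lip_bound k B * Rabs (last_point T t0 u - t))).
  - apply gmono_lip; auto; [apply last_point_t0|lra].
  - apply Rmult_le_compat_l; [apply lip_bound_nonneg; lra|]. apply last_point_near; auto.
Qed.

End GeneralizedMonomials.

Lemma ex_exp : forall x, ex_series (fun k => x ^ k / INR (Factorial.fact k)).
Proof.
  intro x. exists (exp x). pose proof (is_exp_Reals x) as H. unfold is_pseries in H.
  eapply is_series_ext; [|apply H]. intro k. simpl. unfold scal; simpl; unfold mult; simpl.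
  unfold Rdiv. rewrite pow_n_pow. reflexivity.
Qed.

Lemma is_series_zero : is_series (fun _ : nat => 0) 0.
Proof.
  unfold is_series. apply (filterlim_ext (fun _ => 0)).
  - intro n. rewrite sum_n_const. simpl. unfold scal; simpl; unfold mult; simpl; ring.
  - apply filterlim_const.
Qed.

Lemma ex_series_dom : forall a b, (forall k, Rabs (a k) <= b k) -> ex_series b ->
  ex_series a /\ Rabs (Series a) <= Series b.
Proof.
  intros a b H Hb.
  assert (Ha : ex_series (fun k => Rabs (a k))).
  { apply (ex_series_le (K := R_AbsRing) (V := R_CompleteNormedModule)) with b; auto.
    intro k. change (Rabs (Rabs (a k)) <= b k). rewrite Rabs_Rabsolu; auto. }
  split; [apply ex_series_Rabs; auto|].
  eapply Rle_trans; [apply Series_Rabs; auto|].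
  apply Series_le; auto. intro k; split; [apply Rabs_pos|auto].
Qed.

Lemma ex_series_Rscal : forall c a, ex_series a -> ex_series (fun k => c * a k).
Proof. intros. apply (ex_series_scal_l (K := R_AbsRing) (V := R_NormedModule)); auto. Qed.

Lemma ex_series_Rminus : forall a b, ex_series a -> ex_series b -> ex_series (fun k => a k - b k).
Proof. intros. apply (ex_series_minus (K := R_AbsRing) (V := R_NormedModule)); auto. Qed.

Lemma rsum_series : forall n (a : nat -> nat -> R), (forall j, (j < n)%nat -> ex_series (a j)) ->
  ex_series (fun k => rsum n (fun j => a j k)) /\
  rsum n (fun j => Series (a j)) = Series (fun k => rsum n (fun j => a j k)).
Proof.
  induction n; intros a H.
  - simpl. split; [exists 0; apply is_series_zero|].
    symmetry. apply is_series_unique. apply is_series_zero.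
  - destruct (IHn a) as [H1 H2]; [intros; apply H; lia|]. simpl. rewrite H2.
    assert (ex_series (a n)) by (apply H; lia).
    split; [apply (ex_series_plus (K := R_AbsRing) (V := R_NormedModule)); auto|].
    rewrite <- Series_plus; auto.
Qed.

Definition l1 (n : nat) (v : vec) : R := rsum n (fun i => Rabs (v i)).

Lemma sumsq_le : forall n (v : vec), rsum n (fun i => v i ^ 2) <= (l1 n v) ^ 2.
Proof.
  unfold l1. induction n; intros; simpl; [lra|]. specialize (IHn v).
  assert (0 <= rsum n (fun i => Rabs (v i))) by (apply rsum_nonneg; intros; apply Rabs_pos).
  pose proof (Rabs_pos (v n)). simpl in *.
  assert (v n * (v n * 1) = Rabs (v n) * Rabs (v n)) by (rewrite <- Rabs_mult, Rabs_right; [ring|nra]).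
  nra.
Qed.

Lemma vnorm_l1 : forall n v, vnorm n v <= l1 n v.
Proof.
  intros. unfold vnorm. rewrite <- (sqrt_pow2 (l1 n v)).
  - apply sqrt_le_1_alt. apply sumsq_le.
  - apply rsum_nonneg; intros; apply Rabs_pos.
Qed.

Lemma l1_bound : forall n v c, (forall i, (i < n)%nat -> Rabs (v i) <= c) -> l1 n v <= INR n * c.
Proof. intros. unfold l1. rewrite <- rsum_const. apply rsum_le; auto. Qed.

Lemma comp_le_l1 : forall n v i, (i < n)%nat -> Rabs (v i) <= l1 n v.
Proof. intros. unfold l1. apply (rsum_term_le n (fun i => Rabs (v i))); auto. intros; apply Rabs_pos. Qed.

Fixpoint mat_pow (n : nat) (M : nat -> nat -> R) (k : nat) (x0 : vec) : vec :=
  match k with O => x0 | S j => mat_vec n M (mat_pow n M j x0) end.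

Definition mat_l1 (n : nat) (M : nat -> nat -> R) : R := rsum n (fun i => rsum n (fun j => Rabs (M i j))).

Lemma mat_l1_nonneg : forall n M, 0 <= mat_l1 n M.
Proof. intros. unfold mat_l1. apply rsum_nonneg; intros; apply rsum_nonneg; intros; apply Rabs_pos. Qed.

Lemma l1_mat : forall n M v, l1 n (mat_vec n M v) <= mat_l1 n M * l1 n v.
Proof.
  intros. unfold l1, mat_l1, mat_vec. rewrite Rmult_comm, <- rsum_scal. apply rsum_le. intros i Hi.
  eapply Rle_trans; [apply rsum_abs|]. rewrite <- rsum_scal. apply rsum_le. intros j Hj.
  rewrite Rabs_mult. pose proof (comp_le_l1 n v j Hj). unfold l1 in H. pose proof (Rabs_pos (M i j)). nra.
Qed.

Lemma mat_pow_bound : forall n M x0 k i, (i < n)%nat ->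
  Rabs (mat_pow n M k x0 i) <= l1 n x0 * mat_l1 n M ^ k.
Proof.
  intros. eapply Rle_trans; [apply comp_le_l1; eauto|]. rewrite Rmult_comm. induction k; simpl; [lra|].
  eapply Rle_trans; [apply l1_mat|]. rewrite Rmult_assoc. apply Rmult_le_compat_l; [apply mat_l1_nonneg|auto].
Qed.

(** The series solution [X(t) = sum_k h_k(t) M^k x0] of [x^Delta = M x]. *)

Definition series_solution (T : R -> Prop) (t0 : R) (n : nat) (M : nat -> nat -> R) (x0 : vec)
  (t : R) : vec :=
  fun i => Series (fun k => gmono T t0 k t * mat_pow n M k x0 i).

Section SeriesSolution.
Variable T : R -> Prop.
Variable t0 : R.
Hypothesis Tt0 : T t0.
Hypothesis Hu : unbounded_above T.
Variable n : nat.
Variable M : nat -> nat -> R.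
Variable x0 : vec.

Let C := mat_l1 n M.
Let c0 := l1 n x0.
Let X := series_solution T t0 n M x0.
Local Notation coef k i := (mat_pow n M k x0 i).

Lemma l1_x0_nonneg : 0 <= c0.
Proof. unfold c0, l1. apply rsum_nonneg; intros; apply Rabs_pos. Qed.

Lemma C_pow_nonneg : forall k, 0 <= C ^ k.
Proof. intro k. apply pow_le, mat_l1_nonneg. Qed.

(* [sum_k (B - t0)^k / k! C^k = exp (C (B - t0))] dominates the series. *)
Lemma ex_series_exp_bound : forall B, ex_series (fun k => poly_mono t0 k B * C ^ k).
Proof.
  intro B. destruct (ex_exp (C * (B - t0))) as [l Hl]. exists l. eapply is_series_ext; [|apply Hl].
  intro k. simpl. unfold poly_mono. rewrite Rpow_mult_distr. unfold Rdiv. ring.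
Qed.

Lemma ex_series_lip_bound : forall B, ex_series (fun k => lip_bound t0 k B * C ^ k).
Proof.
  intro B. apply ex_series_incr_1. simpl lip_bound.
  apply (ex_series_ext (fun k => C * (poly_mono t0 k B * C ^ k))); [intro k; simpl; ring|].
  apply ex_series_Rscal, ex_series_exp_bound.
Qed.

(* Lipschitz constant of [X] on [[t0, B]] (up to the factor [|x0|_1]). *)
Definition lip_sum (B : R) := Series (fun k => lip_bound t0 k B * C ^ k).

Lemma lip_sum_nonneg : forall B, t0 <= B -> 0 <= lip_sum B.
Proof.
  intros B HB. unfold lip_sum. rewrite <- (is_series_unique (fun _ : nat => 0) 0 is_series_zero).
  apply Series_le; [|apply ex_series_lip_bound]. intro k. split; [lra|].
  apply Rmult_le_pos; [apply lip_bound_nonneg; auto|apply C_pow_nonneg].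
Qed.

Lemma series_summable : forall t i, (i < n)%nat -> t0 <= t -> ex_series (fun k => gmono T t0 k t * coef k i).
Proof.
  intros t i Hi Ht. apply (ex_series_dom _ (fun k => c0 * (poly_mono t0 k t * C ^ k))).
  - intro k. rewrite Rabs_mult, Rabs_right by (apply Rle_ge, gmono_nonneg; auto).
    pose proof (gmono_nonneg T t0 Tt0 k t Ht). pose proof (gmono_bound T t0 Tt0 k t Ht).
    pose proof (mat_pow_bound n M x0 k i Hi). fold C c0 in H1. pose proof (C_pow_nonneg k).
    pose proof (Rabs_pos (coef k i)).
    apply Rle_trans with (poly_mono t0 k t * (c0 * C ^ k)); [apply Rmult_le_compat; auto|lra].
  - apply ex_series_Rscal, ex_series_exp_bound.
Qed.

Lemma series_solution_t0 : forall i, (i < n)%nat -> X t0 i = x0 i.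
Proof.
  intros i Hi. unfold X, series_solution. rewrite Series_incr_1 by (apply series_summable; auto; lra).
  rewrite gmono_t0, (Series_ext _ (fun _ => 0)) by (intro k; rewrite gmono_t0; ring).
  rewrite (is_series_unique _ 0 is_series_zero). simpl. ring.
Qed.

Lemma series_solution_sub : forall a b i, (i < n)%nat -> t0 <= a -> t0 <= b ->
  ex_series (fun k => (gmono T t0 k b - gmono T t0 k a) * coef k i) /\
  X b i - X a i = Series (fun k => (gmono T t0 k b - gmono T t0 k a) * coef k i).
Proof.
  intros a b i Hi Ha Hb. unfold X, series_solution.
  assert (E : forall k, (gmono T t0 k b - gmono T t0 k a) * coef k i
                = gmono T t0 k b * coef k i - gmono T t0 k a * coef k i) by (intro; ring).
  split.
  - apply (ex_series_ext (fun k => gmono T t0 k b * coef k i - gmono T t0 k a * coef k i));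
      [intro; symmetry; apply E|apply ex_series_Rminus; apply series_summable; auto].
  - rewrite <- Series_minus by (apply series_summable; auto). apply Series_ext. intro; symmetry; apply E.
Qed.

Lemma series_solution_lip : forall s t B i, (i < n)%nat -> t0 <= s -> t0 <= t -> s <= B -> t <= B ->
  Rabs (X s i - X t i) <= Rabs (s - t) * c0 * lip_sum B.
Proof.
  intros s t B i Hi Hs Ht HsB HtB. destruct (series_solution_sub t s i Hi Ht Hs) as [_ ->].
  unfold lip_sum. rewrite Rmult_assoc, <- Series_scal_l, <- Series_scal_l.
  apply ex_series_dom; [|apply ex_series_Rscal, ex_series_Rscal, ex_series_lip_bound].
  intro k. rewrite Rabs_mult.
  pose proof (mat_pow_bound n M x0 k i Hi). fold C c0 in H.
  pose proof (gmono_lip T t0 Tt0 k s t B Hs Ht HsB HtB).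
  pose proof (lip_bound_nonneg t0 k B ltac:(lra)). pose proof (C_pow_nonneg k). pose proof l1_x0_nonneg.
  pose proof (Rabs_pos (s - t)). pose proof (Rabs_pos (coef k i)).
  apply Rle_trans with ((lip_bound t0 k B * Rabs (s - t)) * (c0 * C ^ k)); [|right; ring].
  apply Rmult_le_compat; auto. apply Rabs_pos.
Qed.

Lemma series_mat_vec : forall t i, t0 <= t ->
  ex_series (fun k => gmono T t0 k t * coef (S k) i) /\
  rsum n (fun j => M i j * X t j) = Series (fun k => gmono T t0 k t * coef (S k) i).
Proof.
  intros t i Ht.
  assert (E : forall k, gmono T t0 k t * coef (S k) i
                = rsum n (fun j => M i j * (gmono T t0 k t * coef k j))).
  { intro k. simpl. unfold mat_vec. rewrite <- rsum_scal. apply rsum_ext. intros; ring. }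
  destruct (rsum_series n (fun j k => M i j * (gmono T t0 k t * coef k j))) as [H1 H2].
  { intros j Hj. apply ex_series_Rscal, series_summable; auto. }
  split; [eapply ex_series_ext; [|apply H1]; intro k; simpl; rewrite E; auto|].
  rewrite (Series_ext _ (fun k => rsum n (fun j => M i j * (gmono T t0 k t * coef k j)))) by (intro; apply E).
  rewrite <- H2. apply rsum_ext. intros j Hj. unfold X, series_solution. rewrite <- Series_scal_l. auto.
Qed.

Lemma series_solution_increment : forall a b t B c i, (i < n)%nat -> t0 <= a -> t0 <= b -> t0 <= t ->
  a <= B -> b <= B -> t <= B -> 0 <= c ->
  (forall k u, Rmin a b < u < Rmax a b ->
     Rabs (gmono T t0 k (last_point T t0 u) - gmono T t0 k t) <= lip_bound t0 k B * c) ->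
  Rabs (X b i - X a i - (b - a) * rsum n (fun j => M i j * X t j)) <= Rabs (b - a) * c * c0 * C * lip_sum B.
Proof.
  intros a b t B c i Hi Ha Hb Ht HaB HbB HtB Hc HK.
  destruct (series_mat_vec t i Ht) as [Hex1 ->].
  destruct (series_solution_sub a b i Hi Ha Hb) as [Hex2 ->].
  rewrite Series_incr_1_aux by (simpl; ring).
  rewrite <- Series_scal_l, <- Series_minus.
  2:{ apply (proj1 (ex_series_incr_1 (K := R_AbsRing) (V := R_NormedModule)
        (fun k => (gmono T t0 k b - gmono T t0 k a) * coef k i))). auto. }
  2:{ apply ex_series_Rscal; auto. }
  unfold lip_sum. rewrite <- Series_scal_l.
  apply ex_series_dom; [|apply ex_series_Rscal, ex_series_lip_bound].
  intro k.
  replace ((gmono T t0 (S k) b - gmono T t0 (S k) a) * coef (S k) i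
           - (b - a) * (gmono T t0 k t * coef (S k) i))
    with ((gmono T t0 (S k) b - gmono T t0 (S k) a - (b - a) * gmono T t0 k t) * coef (S k) i) by ring.
  rewrite Rabs_mult.
  pose proof (gmono_increment T t0 Tt0 k a b (gmono T t0 k t) (lip_bound t0 k B * c) Ha Hb (HK k)).
  pose proof (mat_pow_bound n M x0 (S k) i Hi). fold C c0 in H0. simpl pow in H0.
  pose proof (lip_bound_nonneg t0 k B ltac:(lra)). pose proof (C_pow_nonneg k).
  pose proof (mat_l1_nonneg n M). fold C in H3. pose proof l1_x0_nonneg.
  pose proof (Rabs_pos (b - a)). pose proof (Rabs_pos (coef (S k) i)).
  apply Rle_trans with ((Rabs (b - a) * (lip_bound t0 k B * c)) * (c0 * (C * C ^ k))); [|right; ring].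
  apply Rmult_le_compat; auto. apply Rabs_pos.
Qed.

(* The series solution is locally Lipschitz, hence continuous. *)
Lemma series_solution_cont : forall t, T t -> t0 <= t -> cont_rel vsub (vnorm n) (dom T t0) X t.
Proof.
  intros t Tt Ht. apply small_near_cont_rel.
  pose proof l1_x0_nonneg. pose proof (lip_sum_nonneg (t + 1) ltac:(lra)).
  apply (small_near_of_bound _ _ _ _ (INR n * (c0 * lip_sum (t + 1))) 1); try lra.
  { apply Rmult_le_pos; [apply pos_INR|apply Rmult_le_pos; auto]. }
  { intros; lra. }
  intros s [Ts Hs] Hst. apply Rabs_lt_between' in Hst.
  eapply Rle_trans; [apply vnorm_l1|].
  eapply Rle_trans; [apply (l1_bound n _ (Rabs (s - t) * c0 * lip_sum (t + 1)))|].
  - intros i Hi. apply series_solution_lip; auto; lra.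
  - right; ring.
Qed.

Lemma series_solution_deriv : forall t, T t -> t0 <= t ->
  delta_deriv_at vsub vscal (vnorm n) T (dom T t0) X t (mat_vec n M (X t)).
Proof.
  intros t Tt Ht. set (sg := fjump T t). pose proof (fjump_ge T Hu t) as Hsg. fold sg in Hsg.
  set (B := sg + 1). set (K := c0 * C * lip_sum B).
  assert (HK : 0 <= K).
  { pose proof l1_x0_nonneg. pose proof (mat_l1_nonneg n M).
    pose proof (lip_sum_nonneg B ltac:(unfold B; lra)).
    unfold K, C. apply Rmult_le_pos; [apply Rmult_le_pos|]; auto. }
  (* Near [t], points of [T] to the right of [t] only occur if [t] is right-dense. *)
  set (d1 := if Rlt_dec t sg then sg - t else 1).
  assert (Hd1 : 0 < Rmin 1 d1) by (apply Rmin_pos; unfold d1; destruct (Rlt_dec t sg); lra).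
  apply (small_near_of_bound _ _ _ (fun s => Rabs (sg - s)) (INR n * K) (Rmin 1 d1)); auto.
  { apply Rmult_le_pos; [apply pos_INR|auto]. }
  { intros; apply Rabs_pos. }
  intros s [Ts Hs] Hst. pose proof (Rmin_l 1 d1). pose proof (Rmin_r 1 d1).
  apply Rabs_lt_between' in Hst as Hst'.
  assert (Hcase : s <= t \/ sg = t).
  { unfold d1 in *. destruct (Rlt_dec t sg); [left|right; lra].
    destruct (Rle_lt_dec s t); auto. pose proof (fjump_le T Hu t s Ts r0). fold sg in H1. lra. }
  eapply Rle_trans; [apply vnorm_l1|].
  eapply Rle_trans; [apply (l1_bound n _ (Rabs (sg - s) * Rabs (s - t) * K))|]; [|right; ring].
  intros i Hi. unfold vsub, vscal, mat_vec, K.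
  replace (Rabs (sg - s) * Rabs (s - t) * (c0 * C * lip_sum B))
    with (Rabs (sg - s) * Rabs (s - t) * c0 * C * lip_sum B) by ring.
  apply series_solution_increment; auto; try (unfold B; lra); [apply Rabs_pos|].
  intros k u Hu0. apply integrand_near; auto; unfold B, sg in *; lra.
Qed.

Lemma series_solution_spec : aut_solution T n M t0 x0 X.
Proof.
  split; [apply series_solution_t0|].
  intros t [Tt Ht]. split; [apply series_solution_cont|apply series_solution_deriv]; auto.
Qed.

End SeriesSolution.

(** Pairing with a complex left eigenvector turns [x^Delta = M x] into the
    scalar equation [y^Delta = lam y]. *)

Lemma cxsum_scal : forall r c f, cxsum r (fun k => cxscal c (f k)) = cxscal c (cxsum r f).
Proof.
  intros. rewrite cxscal_mul, <- cxsum_mul_l. apply cxsum_ext. intros. apply cxscal_mul.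
Qed.

Lemma cxscal_rsum : forall r f z, cxscal (rsum r f) z = cxsum r (fun k => cxscal (f k) z).
Proof. induction r; intros; simpl; [cxring|]. rewrite <- IHr. cxring. Qed.

Lemma comp_le_vnorm : forall n v i, (i < n)%nat -> Rabs (v i) <= vnorm n v.
Proof.
  intros. unfold vnorm. rewrite <- sqrt_Rsqr_abs. apply sqrt_le_1_alt.
  replace (Rsqr (v i)) with (v i ^ 2) by (unfold Rsqr; ring).
  apply (rsum_term_le n (fun i => v i ^ 2)); auto. intros; apply pow2_ge_0.
Qed.

Definition pairing (n : nat) (w : nat -> Cpx) (v : vec) : Cpx := cxsum n (fun i => cxscal (v i) (w i)).

Definition left_eigvec (n : nat) (M : nat -> nat -> R) (w : nat -> Cpx) (lam : Cpx) : Prop :=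
  forall j, (j < n)%nat -> cxsum n (fun i => cxscal (M i j) (w i)) = cxmul lam (w j).

Definition wsum (n : nat) (w : nat -> Cpx) : R := rsum n (fun i => cxnorm (w i)).

Lemma wsum_nonneg : forall n w, 0 <= wsum n w.
Proof. intros. apply rsum_nonneg. intros; apply cxn_ge0. Qed.

Lemma pairing_sub : forall n w a b, pairing n w (vsub a b) = cxsub (pairing n w a) (pairing n w b).
Proof. intros. unfold pairing. rewrite <- cxsum_sub. apply cxsum_ext. intros. unfold vsub. cxring. Qed.

Lemma pairing_scal : forall n w c a, pairing n w (vscal c a) = cxscal c (pairing n w a).
Proof. intros. unfold pairing. rewrite <- cxsum_scal. apply cxsum_ext. intros. unfold vscal. cxring. Qed.

Lemma pairing_norm : forall n w v, cxnorm (pairing n w v) <= wsum n w * vnorm n v.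
Proof.
  intros n w v. unfold wsum. rewrite Rmult_comm, <- rsum_scal.
  assert (forall k, (k <= n)%nat ->
    cxnorm (cxsum k (fun i => cxscal (v i) (w i))) <= rsum k (fun i => vnorm n v * cxnorm (w i))).
  { induction k; intros Hk; simpl; [rewrite cxn_0; lra|].
    eapply Rle_trans; [apply cxn_tri|]. rewrite cxn_scal.
    specialize (IHk ltac:(lia)). pose proof (comp_le_vnorm n v k ltac:(lia)). pose proof (cxn_ge0 (w k)).
    nra. }
  apply H. lia.
Qed.

Lemma pairing_mat_vec : forall n M w lam, left_eigvec n M w lam ->
  forall v, pairing n w (mat_vec n M v) = cxmul lam (pairing n w v).
Proof.
  intros n M w lam Hw v. unfold pairing, mat_vec.
  rewrite (cxsum_ext n _ (fun i => cxsum n (fun j => cxscal (v j) (cxscal (M i j) (w i)))))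
    by (intros; rewrite cxscal_rsum; apply cxsum_ext; intros; cxring).
  rewrite cxsum_swap, <- cxsum_mul_l. apply cxsum_ext. intros j Hj.
  rewrite cxsum_scal, Hw by auto. cxring.
Qed.

Lemma pairing_solution : forall T n M t0 x0 X w lam,
  aut_solution T n M t0 x0 X -> left_eigvec n M w lam ->
  cx_solution T lam t0 (pairing n w x0) (fun t => pairing n w (X t)).
Proof.
  intros T n M t0 x0 X w lam [H0 H] Hw. split.
  - unfold pairing. apply cxsum_ext. intros; rewrite H0; auto.
  - intros t Ht. destruct (H t Ht) as [Hc Hd]. pose proof (wsum_nonneg n w). split.
    + apply small_near_cont_rel.
      apply (small_near_dom _ _ (fun s => vnorm n (vsub (X s) (X t))) _ _ (wsum n w));
        [apply cont_rel_small_near; auto|intros; lra|auto|].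
      intros s _. rewrite <- pairing_sub. apply pairing_norm.
    + apply (small_near_dom _ _ (fun s => vnorm n (vsub (vsub (X (fjump T t)) (X s))
          (vscal (fjump T t - s) (mat_vec n M (X t))))) _ _ (wsum n w)); auto; [intros; apply Rabs_pos|].
      intros s _. rewrite <- (pairing_mat_vec n M w lam Hw), <- pairing_scal, <- !pairing_sub.
      apply pairing_norm.
Qed.

Lemma hautus_left_null_eigvec : forall n m A B K lam w,
  (forall j, (j < n + m)%nat -> cxsum n (fun i => cxmul (w i) (pbh_matrix n A B lam i j)) = cx0) ->
  left_eigvec n (closed_loop m A B K) w lam.
Proof.
  intros n m A B K lam w Hw.
  assert (HA : forall j, (j < n)%nat -> cxsum n (fun i => cxscal (A i j) (w i)) = cxmul lam (w j)).
  { intros j Hj. specialize (Hw j ltac:(lia)).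
    rewrite (cxsum_ext n _ (fun i => cxsub (if (i =? j)%nat then cxmul lam (w i) else cx0)
      (cxscal (A i j) (w i)))) in Hw.
    - rewrite cxsum_sub, cxsum_delta in Hw by auto.
      destruct (cxmul lam (w j)), (cxsum n (fun i => cxscal (A i j) (w i))). cxsimpl.
      injection Hw; intros. apply cx_eq; simpl; lra.
    - intros i Hi. unfold pbh_matrix. destruct (Nat.ltb_spec j n); [|lia].
      destruct (i =? j)%nat; cxring. }
  assert (HB : forall k, (k < m)%nat -> cxsum n (fun i => cxscal (B i k) (w i)) = cx0).
  { intros k Hk. rewrite <- (Hw (n + k)%nat) by lia. apply cxsum_ext. intros i Hi.
    unfold pbh_matrix. destruct (Nat.ltb_spec (n + k) n); [lia|].
    replace (n + k - n)%nat with k by lia. cxring. }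
  intros j Hj. unfold closed_loop.
  rewrite (cxsum_ext n _ (fun i => cxadd (cxscal (A i j) (w i))
    (cxsum m (fun k => cxscal (K k j) (cxscal (B i k) (w i))))))
    by (intros i _; rewrite (cxsum_ext m _ (fun k => cxscal (B i k * K k j) (w i))) by (intros; cxring);
        rewrite <- cxscal_rsum; cxring).
  rewrite cxsum_add, HA, cxsum_swap by auto.
  rewrite cxsum_zero; [cxring|]. intros k Hk. rewrite cxsum_scal, HB by auto. cxring.
Qed.

(** Stability criterion for [lam]: it suffices to have, from every initial
    time, one solution of fixed nonzero initial size that decays uniformly
    exponentially, since by uniqueness every solution is a multiple of it. *)

Definition decaying_solutions (T : R -> Prop) (lam : Cpx) (c Kd al : R) : Prop :=
  forall t0, T t0 -> exists y, cxnorm (y t0) = c /\ cx_solution T lam t0 (y t0) y /\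
    forall t, T t -> t0 <= t -> cxnorm (y t) <= Kd * exp (- al * (t - t0)).

Lemma in_S_T_of_decaying_solutions : forall T lam c Kd al,
  is_time_scale T -> unbounded_above T -> 0 < c -> 0 <= Kd -> 0 < al ->
  decaying_solutions T lam c Kd al -> in_S_T T lam.
Proof.
  intros T lam c Kd al HT Hu Hc HKd Hal Hdec.
  exists (Rmax 1 (Kd / c)), al, (fun _ => True). split; [apply Rmax_l|]. split; auto. split.
  { split; auto. intros z _. exists 1; split; [lra|auto]. }
  intros t0 t Tt0 Tt Hle z0 _ z Hz.
  destruct (Hdec t0 Tt0) as [y [Hy0 [Hy Hyt]]].
  (* [y(t0) z - z0 y] solves the equation from [0], hence vanishes. *)
  pose proof (cx_solution_lincomb T lam t0 z0 (y t0) z y (y t0) (cxneg z0) Hz Hy) as Hd.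
  replace (cxadd (cxmul (y t0) z0) (cxmul (cxneg z0) (y t0))) with cx0 in Hd by cxring.
  pose proof (cx_solution_from_zero T HT Hu lam t0 _ Tt0 Hd t Tt Hle) as Hzero. simpl in Hzero.
  assert (Heq : cxnorm (cxmul (y t0) (z t)) = cxnorm (cxmul z0 (y t))).
  { f_equal. destruct (y t0), (z t), z0, (y t). cxsimpl. injection Hzero; intros.
    apply cx_eq; simpl; lra. }
  rewrite !cxn_mul, Hy0 in Heq. specialize (Hyt t Tt Hle).
  set (E := exp (- al * (t - t0))) in *. assert (0 < E) by apply exp_pos.
  pose proof (cxn_ge0 z0). pose proof (cxn_ge0 (z t)).
  apply Rle_trans with (Kd / c * E * cxnorm z0).
  - apply Rmult_le_reg_l with c; auto. rewrite Heq.
    replace (c * (Kd / c * E * cxnorm z0)) with (cxnorm z0 * (Kd * E)) by (field; lra).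
    apply Rmult_le_compat_l; auto.
  - apply Rmult_le_compat_r; auto. apply Rmult_le_compat_r; [lra|]. apply Rmax_r.
Qed.

Lemma vnorm_delta : forall n i0 dl, (i0 < n)%nat -> 0 <= dl ->
  vnorm n (fun i => if (i =? i0)%nat then dl else 0) = dl.
Proof.
  intros n i0 dl Hi0 Hdl. unfold vnorm.
  rewrite (rsum_ext n _ (fun i => if (i =? i0)%nat then dl ^ 2 else 0))
    by (intros i Hi; destruct (i =? i0)%nat; simpl; ring).
  rewrite rsum_delta by auto. apply sqrt_pow2; auto.
Qed.

Lemma projected_solutions_decay : forall T n M w lam i0,
  unbounded_above T -> pos_unif_exp_stable T n M -> left_eigvec n M w lam ->
  (i0 < n)%nat -> w i0 <> cx0 ->
  exists c Kd al, 0 < c /\ 0 <= Kd /\ 0 < al /\ decaying_solutions T lam c Kd al.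
Proof.
  intros T n M w lam i0 Hu [Ks [al [V [HK1 [Hal [[HV0 HVo] Hst]]]]]] Hw Hi0 Hwi0.
  destruct (HVo vzero HV0) as [r0 [Hr0 HV]].
  set (dl := r0 / 2). set (x0 := fun i : nat => if (i =? i0)%nat then dl else 0).
  assert (Hx0 : vnorm n x0 = dl) by (apply vnorm_delta; auto; unfold dl; lra).
  assert (HVx0 : V x0).
  { apply HV. replace (vnorm n (vsub x0 vzero)) with (vnorm n x0)
      by (unfold vnorm; f_equal; apply rsum_ext; intros; unfold vsub, vzero; ring).
    rewrite Hx0. unfold dl; lra. }
  assert (Hx0nn : Defs.nonneg n x0) by (intros i Hi; unfold x0, dl; destruct (i =? i0)%nat; lra).
  assert (Hpx0 : pairing n w x0 = cxscal dl (w i0)).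
  { unfold pairing, x0. rewrite <- (cxsum_delta n i0 (fun i => cxscal dl (w i))) by auto.
    apply cxsum_ext. intros i _. destruct (i =? i0)%nat; cxring. }
  pose proof (cxn_ge0 (w i0)). assert (cxnorm (w i0) <> 0) by (intro E; apply Hwi0, cxn_eq0, E).
  exists (dl * cxnorm (w i0)), (wsum n w * Ks * dl), al.
  split; [unfold dl; apply Rmult_lt_0_compat; lra|].
  split; [pose proof (wsum_nonneg n w); unfold dl; apply Rmult_le_pos; [apply Rmult_le_pos|]; lra|].
  split; auto.
  intros t0 Tt0. set (X := series_solution T t0 n M x0).
  assert (HX : aut_solution T n M t0 x0 X) by (apply series_solution_spec; auto).
  assert (HXt0 : pairing n w (X t0) = pairing n w x0).
  { unfold pairing. apply cxsum_ext. intros i Hi. destruct HX as [HX0 _]. rewrite HX0; auto. }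
  exists (fun t => pairing n w (X t)). split; [|split].
  - rewrite HXt0, Hpx0, cxn_scal, Rabs_right; unfold dl; lra.
  - rewrite HXt0. exact (pairing_solution T n M t0 x0 X w lam HX Hw).
  - intros t Tt Hle. specialize (Hst t0 t Tt0 Tt Hle x0 HVx0 Hx0nn X HX). rewrite Hx0 in Hst.
    eapply Rle_trans; [apply pairing_norm|]. pose proof (wsum_nonneg n w).
    apply Rle_trans with (wsum n w * (Ks * exp (- al * (t - t0)) * dl)); [apply Rmult_le_compat_l; auto|].
    right; ring.
Qed.

Theorem mainTheorem5 (T : R -> Prop) (n m : nat) (A B : nat -> nat -> R) :
  is_time_scale T -> unbounded_above T -> bounded_graininess T ->
  positive_control_system T n m A B ->
  positively_stabilizable T n m A B ->
  forall lam : Cpx, in_spec n A lam -> ~ in_S_T T lam ->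
    has_rank n (n + m) (pbh_matrix n A B lam) n.
Proof.
  intros HT Hu _ _ [K [_ Hstab]] lam _ HnS.
  (* Otherwise a nonzero left null vector [w] of [[lam I - A, B]] exists. *)
  apply full_rank_of_no_left_null_vector. intros w Hw i0 Hi0.
  apply NNPP; intro Hwi0. apply HnS.
  pose proof (hautus_left_null_eigvec n m A B K lam w Hw) as Heig.
  destruct (projected_solutions_decay T n (closed_loop m A B K) w lam i0 Hu Hstab Heig Hi0 Hwi0)
    as [c [Kd [al [Hc [HKd [Hal Hdec]]]]]].
  exact (in_S_T_of_decaying_solutions T lam c Kd al HT Hu Hc HKd Hal Hdec).
Qed.
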